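(* Let $N\ge3$, $\beta>-2$, $k_\infty>0$ and $p>p_S(\beta)$. There exists a unique $\bar v\in C^2(0,\infty)$ solving $$\bar v''+\frac{N-1}{r}\bar v'+k_\infty r^{\beta}\max\{\bar v,0\}^p=0\ \ (r>0),\qquad \lim_{r\to\infty}r^{N-2}\bar v(r)=1.$$ Moreover, $\bar r:=\sup\{r>0:\bar v(r)=0\}$ satisfies $0<\bar r<\infty$.
   Context: $p_S(\beta):=\frac{N+2+2\beta}{N-2}$. *)

From Stdlib Require Import Reals.
From Coquelicot Require Import Coquelicot.
Open Scope R_scope.

Definition pS (N : nat) (beta : R) : R := (INR N + 2 + 2 * beta) / (INR N - 2).

Definition pospow (x p : R) : R := if Rle_dec x 0 then 0 else Rpower x p.

Definition C2_pos (v : R -> R) : Prop :=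
  (forall r, 0 < r -> ex_derive v r) /\
  (forall r, 0 < r -> ex_derive (Derive v) r) /\
  (forall r, 0 < r -> continuous (Derive_n v 2) r).

Definition solves (N : nat) (beta kinf p : R) (v : R -> R) : Prop :=
  C2_pos v /\
  (forall r, 0 < r ->
     Derive_n v 2 r + (INR N - 1) / r * Derive v r
       + kinf * Rpower r beta * pospow (v r) p = 0) /\
  is_lim (fun r => r ^ (N - 2) * v r) p_infty 1.

(* The substitution [v(r) = r^(2-N) u(r^(-theta))], [theta = ((N-2) p - N - beta) / 2 > 0], turns
   the problem into the Lane-Emden initial value problem
     [u'' + (a-1)/t u' + c max(u,0)^p = 0],  [u(0) = 1],  [u'(0) = 0],
   in the fractional dimension [a = 2 + (N-2)/theta > 2], with [c = kinf / theta^2]; the condition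
   at infinity becomes [u(0) = 1], and [p > p_S(beta)] becomes [(a-2)(p-1) < 4]: [p] is subcritical
   in dimension [a].
   Written as an integral equation, this problem has Picard iterates whose increments are dominated
   by the terms of an exponential series, which gives a solution; the same estimate gives
   uniqueness. Conversely a [C^2] solution with [u(0+) = 1] solves the integral equation, since a
   nonzero value of the first integral [t^(a-1) u' + c \int_0^t s^(a-1) max(u,0)^p] would make [u]
   blow up like [t^(2-a)] at [0].
   Were [u] positive, the Pohozaev functional would be increasing and positive, while the decay
   [u^(p-1) <= C / t^2] forces it to [0] at infinity; so [u] vanishes, and since
   [u(t) >= 1 - c t^2 / 4] its zeros stay away from [0], i.e. the zeros of [v] are bounded. *)

From Stdlib Require Import Reals Lra Lia Classical.
From Coquelicot Require Import Coquelicot.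
Open Scope R_scope.

Lemma locally_of_pos (x : R) (P : R -> Prop) :
  0 < x -> (forall y, 0 < y -> P y) -> locally x P.
Proof.
  intros Hx HP. exists (mkposreal x Hx). intros y Hy.
  change (Rabs (y - x) < x) in Hy. apply HP. apply Rabs_def2 in Hy. lra.
Qed.

Lemma locally_of_neg (x : R) (P : R -> Prop) :
  x < 0 -> (forall y, y < 0 -> P y) -> locally x P.
Proof.
  intros Hx HP. exists (mkposreal (- x) ltac:(lra)). intros y Hy.
  change (Rabs (y - x) < - x) in Hy. apply HP. apply Rabs_def2 in Hy. lra.
Qed.

(* Coquelicot's rules restated on [R -> R], so that they unify with goals written with [+], [*]. *)
Lemma continuous_Rplus (f g : R -> R) x :
  continuous f x -> continuous g x -> continuous (fun y => f y + g y) x.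
Proof. apply (continuous_plus f g). Qed.

Lemma continuous_Rminus (f g : R -> R) x :
  continuous f x -> continuous g x -> continuous (fun y => f y - g y) x.
Proof. apply (continuous_minus f g). Qed.

Lemma continuous_Rmult (f g : R -> R) x :
  continuous f x -> continuous g x -> continuous (fun y => f y * g y) x.
Proof. apply (continuous_mult f g). Qed.

Lemma continuous_Rcomp (f g : R -> R) x :
  continuous f x -> continuous g (f x) -> continuous (fun y => g (f y)) x.
Proof. apply (continuous_comp f g). Qed.

Lemma is_derive_Rplus (f g : R -> R) x df dg :
  is_derive f x df -> is_derive g x dg -> is_derive (fun y => f y + g y) x (df + dg).
Proof. apply (is_derive_plus f g). Qed.

Lemma is_derive_Rminus (f g : R -> R) x df dg :
  is_derive f x df -> is_derive g x dg -> is_derive (fun y => f y - g y) x (df - dg).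
Proof. apply (is_derive_minus f g). Qed.

Lemma is_derive_Rmult (f g : R -> R) x df dg :
  is_derive f x df -> is_derive g x dg ->
  is_derive (fun y => f y * g y) x (df * g x + f x * dg).
Proof. intros; apply (is_derive_mult f g); auto. intros; apply Rmult_comm. Qed.

Lemma is_derive_Rscal (f : R -> R) k x df :
  is_derive f x df -> is_derive (fun y => k * f y) x (k * df).
Proof. apply (is_derive_scal f). Qed.

Lemma is_derive_Rcomp (f g : R -> R) x df dg :
  is_derive f (g x) df -> is_derive g x dg -> is_derive (fun y => f (g y)) x (df * dg).
Proof.
  intros Hf Hg. rewrite Rmult_comm. exact (is_derive_comp f g x df dg Hf Hg).
Qed.

Lemma is_derive_Rext (f g : R -> R) (x l : R) :
  (forall t, f t = g t) -> is_derive f x l -> is_derive g x l.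
Proof. apply is_derive_ext. Qed.

Lemma is_derive_eq (f : R -> R) (x l l' : R) : l = l' -> is_derive f x l -> is_derive f x l'.
Proof. intros <-; auto. Qed.

Lemma le_of_is_derive_ge0 (f df : R -> R) x y :
  x <= y -> (forall t, x < t < y -> is_derive f t (df t)) ->
  (forall t, x <= t <= y -> continuous f t) -> (forall t, x < t < y -> 0 <= df t) ->
  f x <= f y.
Proof.
  intros Hxy Hd Hc Hpos. destruct (Req_dec x y) as [-> | Hne]; [lra |].
  assert (pr1 : forall t, x < t < y -> derivable_pt f t).
  { intros t Ht. exists (df t). apply is_derive_Reals, Hd, Ht. }
  assert (pr2 : forall t, x < t < y -> derivable_pt id t).
  { intros t _. apply derivable_pt_id. }
  destruct (MVT f id x y pr1 pr2 ltac:(lra)) as [t [Ht HMVT]].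
  - intros; apply continuity_pt_filterlim, Hc; lra.
  - intros; apply derivable_continuous_pt, derivable_pt_id.
  - assert (Hid : derive_pt id t (pr2 t Ht) = 1).
    { apply derive_pt_eq_0, derivable_pt_lim_id. }
    assert (Hf : derive_pt f t (pr1 t Ht) = df t).
    { apply derive_pt_eq_0, is_derive_Reals, Hd, Ht. }
    rewrite Hid, Hf in HMVT. unfold id in HMVT.
    assert (Ht' := Hpos t Ht). nra.
Qed.

Lemma le_of_is_derive_le0 (f df : R -> R) x y :
  x <= y -> (forall t, x < t < y -> is_derive f t (df t)) ->
  (forall t, x <= t <= y -> continuous f t) -> (forall t, x < t < y -> df t <= 0) ->
  f y <= f x.
Proof.
  intros Hxy Hd Hc Hneg.
  enough (- f x <= - f y) by lra.
  apply (le_of_is_derive_ge0 (fun t => - f t) (fun t => - df t)); auto.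
  - intros; apply (is_derive_opp f); auto.
  - intros; apply (continuous_opp f); auto.
  - intros t Ht. specialize (Hneg t Ht). lra.
Qed.

Lemma eq_of_is_derive_0 (f : R -> R) x y :
  x <= y -> (forall t, x < t < y -> is_derive f t 0) ->
  (forall t, x <= t <= y -> continuous f t) -> f x = f y.
Proof.
  intros Hxy Hd Hc. apply Rle_antisym.
  - apply (le_of_is_derive_ge0 f (fun _ => 0)); auto with real.
  - apply (le_of_is_derive_le0 f (fun _ => 0)); auto with real.
Qed.

(** * Real powers *)

Lemma Rpower_pos x e : 0 < Rpower x e.
Proof. apply exp_pos. Qed.

Lemma Rpower_base_1 e : Rpower 1 e = 1.
Proof. unfold Rpower. rewrite ln_1, Rmult_0_r. apply exp_0. Qed.

Lemma Rpower_le_1 x e : 0 < x <= 1 -> 0 <= e -> Rpower x e <= 1.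
Proof.
  intros Hx He. rewrite <- (Rpower_base_1 e). destruct (Req_dec e 0) as [->|].
  - rewrite !Rpower_O; lra.
  - apply Rle_Rpower_l; lra.
Qed.

Lemma Rpower_le_base x e : 0 < x <= 1 -> 1 <= e -> Rpower x e <= x.
Proof.
  intros Hx He. replace e with (1 + (e - 1)) by ring.
  rewrite Rpower_plus, Rpower_1 by lra.
  assert (Rpower x (e - 1) <= 1) by (apply Rpower_le_1; lra).
  pose proof (Rpower_pos x (e - 1)). nra.
Qed.

Lemma Rle_Rpower_l_neg x y e : 0 < x <= y -> e <= 0 -> Rpower y e <= Rpower x e.
Proof.
  intros H He. rewrite <- (Ropp_involutive e), !(Rpower_Ropp _ (- e)).
  apply Rinv_le_contravar; [apply Rpower_pos | apply Rle_Rpower_l; lra].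
Qed.

Lemma Rlt_Rpower_l_neg x y e : 0 < x < y -> e < 0 -> Rpower y e < Rpower x e.
Proof.
  intros H He. rewrite <- (Ropp_involutive e), !(Rpower_Ropp _ (- e)).
  apply Rinv_lt_contravar.
  - apply Rmult_lt_0_compat; apply Rpower_pos.
  - apply Rlt_Rpower_l; lra.
Qed.

Lemma Rpower_Rpower_inv x e : 0 < x -> e <> 0 -> Rpower (Rpower x e) (/ e) = x.
Proof. intros Hx He. rewrite Rpower_mult, Rinv_r by exact He. apply Rpower_1, Hx. Qed.

Lemma Rpower_inv_Rpower x e : 0 < x -> e <> 0 -> Rpower (Rpower x (/ e)) e = x.
Proof. intros Hx He. rewrite Rpower_mult, Rinv_l by exact He. apply Rpower_1, Hx. Qed.

Lemma is_derive_Rpower x e : 0 < x -> is_derive (fun t => Rpower t e) x (e * Rpower x (e - 1)).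
Proof. intros Hx. apply is_derive_Reals. apply derivable_pt_lim_power, Hx. Qed.

Lemma continuous_Rpower x e : 0 < x -> continuous (fun t => Rpower t e) x.
Proof.
  intros Hx. apply (ex_derive_continuous (fun t => Rpower t e)).
  eexists; apply is_derive_Rpower, Hx.
Qed.

Lemma pospow_of_pos x e : 0 < x -> pospow x e = Rpower x e.
Proof. intros; unfold pospow; destruct (Rle_dec x 0); [lra | auto]. Qed.

Lemma pospow_of_nonpos x e : x <= 0 -> pospow x e = 0.
Proof. intros; unfold pospow; destruct (Rle_dec x 0); [auto | lra]. Qed.

Lemma pospow_ge0 x e : 0 <= pospow x e.
Proof. unfold pospow; destruct (Rle_dec x 0); [lra | left; apply Rpower_pos]. Qed.

Lemma pospow_le_1 x e : x <= 1 -> 0 <= e -> pospow x e <= 1.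
Proof.
  intros; unfold pospow; destruct (Rle_dec x 0); [lra | apply Rpower_le_1; lra].
Qed.

Lemma pospow_le_compat x y e : x <= y -> 0 <= e -> pospow x e <= pospow y e.
Proof.
  intros; unfold pospow; destruct (Rle_dec x 0), (Rle_dec y 0).
  - lra.
  - left; apply Rpower_pos.
  - lra.
  - apply Rle_Rpower_l; lra.
Qed.

Lemma pospow_mult r x e : 0 < r -> pospow (r * x) e = Rpower r e * pospow x e.
Proof.
  intros Hr. destruct (Rle_or_lt x 0).
  - rewrite !pospow_of_nonpos by nra. ring.
  - rewrite !pospow_of_pos by nra. symmetry; apply Rpower_mult_distr; auto.
Qed.

Lemma is_derive_pospow x e : 0 < x -> is_derive (fun t => pospow t e) x (e * Rpower x (e - 1)).
Proof.
  intros Hx. apply (is_derive_ext_loc (fun t => Rpower t e)).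
  - apply locally_of_pos; auto. intros; symmetry; apply pospow_of_pos; auto.
  - apply is_derive_Rpower, Hx.
Qed.

Lemma continuous_pospow x e : 0 < e -> continuous (fun t => pospow t e) x.
Proof.
  intros He. destruct (Rtotal_order x 0) as [Hx | [-> | Hx]].
  - apply (continuous_ext_loc _ (fun _ => 0)).
    + apply locally_of_neg; auto. intros; symmetry; apply pospow_of_nonpos; lra.
    + apply continuous_const.
  - (* near 0, [pospow y e < eps] as soon as [y < eps ^ (1/e)] *)
    apply filterlim_locally. intros eps.
    exists (mkposreal _ (Rpower_pos eps (/ e))). intros y Hy.
    change (Rabs (pospow y e - pospow 0 e) < eps).
    change (Rabs (y - 0) < Rpower eps (/ e)) in Hy.
    rewrite (pospow_of_nonpos 0), Rminus_0_r by lra. rewrite Rminus_0_r in Hy.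
    destruct (Rle_or_lt y 0).
    + rewrite pospow_of_nonpos, Rabs_R0 by auto. apply cond_pos.
    + rewrite pospow_of_pos, Rabs_pos_eq by (auto || (left; apply Rpower_pos)).
      rewrite Rabs_pos_eq in Hy by lra.
      rewrite <- (Rpower_1 eps) by apply cond_pos. rewrite <- (Rinv_l e) by lra.
      rewrite <- Rpower_mult. apply Rlt_Rpower_l; lra.
  - apply (ex_derive_continuous (fun t => pospow t e)). eexists; apply is_derive_pospow, Hx.
Qed.

Lemma pospow_lipschitz x y p :
  1 <= p -> x <= 1 -> y <= 1 -> Rabs (pospow x p - pospow y p) <= p * Rabs (x - y).
Proof.
  intros Hp.
  assert (Hmono : forall x y, y < x -> x <= 1 -> 0 <= pospow x p - pospow y p <= p * (x - y)).
  { clear x y. intros x y Hxy Hx1. split.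
    { pose proof (pospow_le_compat y x p). lra. }
    destruct (Rle_or_lt x 0), (Rle_or_lt y 0).
    - rewrite !pospow_of_nonpos by lra. nra.
    - lra.
    - rewrite (pospow_of_nonpos y), pospow_of_pos by lra.
      assert (Rpower x p <= x) by (apply Rpower_le_base; lra). nra.
    - destruct (MVT_gen (fun t => pospow t p) y x (fun t => p * Rpower t (p - 1)))
        as [z [Hz ->]].
      + intros t Ht. rewrite Rmin_left, Rmax_right in Ht by lra.
        apply is_derive_pospow; lra.
      + intros t _. apply continuity_pt_filterlim, continuous_pospow; lra.
      + rewrite Rmin_left, Rmax_right in Hz by lra.
        assert (Rpower z (p - 1) <= 1) by (apply Rpower_le_1; lra).
        apply Rmult_le_compat_r; nra. }
  intros Hx Hy. destruct (Rtotal_order x y) as [H | [-> | H]].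
  - specialize (Hmono y x H Hy).
    rewrite Rabs_minus_sym, (Rabs_minus_sym x), !Rabs_pos_eq by lra. lra.
  - rewrite !Rminus_diag, Rabs_R0. lra.
  - specialize (Hmono x y H Hx). rewrite !Rabs_pos_eq by lra. lra.
Qed.

Lemma ex_RInt_of_continuous (f : R -> R) a b : (forall x, continuous f x) -> ex_RInt f a b.
Proof. intros Hf; apply (ex_RInt_continuous (V := R_CompleteNormedModule)); auto. Qed.

Lemma is_derive_RInt_0 (f : R -> R) t :
  (forall x, continuous f x) -> is_derive (RInt f 0) t (f t).
Proof.
  intros Hf. apply (is_derive_RInt f (RInt f 0) 0); auto.
  apply filter_forall. intros u. apply (RInt_correct (V := R_CompleteNormedModule)).
  apply ex_RInt_of_continuous, Hf.
Qed.

Lemma continuous_RInt_0 (f : R -> R) t : (forall x, continuous f x) -> continuous (RInt f 0) t.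
Proof.
  intros Hf. apply (ex_derive_continuous (RInt f 0)). eexists; apply is_derive_RInt_0, Hf.
Qed.

Lemma continuous_monomial K n x : continuous (fun y => K * y ^ n) x.
Proof. apply (ex_derive_continuous (fun y => K * y ^ n)). auto_derive; auto. Qed.

Lemma RInt_monomial K n t : RInt (fun x => K * x ^ n) 0 t = K * t ^ S n / INR (S n).
Proof.
  apply is_RInt_unique.
  assert (HS : INR (S n) <> 0) by (apply not_0_INR; lia).
  replace (K * t ^ S n / INR (S n))
    with (minus (K * t ^ S n / INR (S n)) (K * 0 ^ S n / INR (S n)))
    by (unfold minus, plus, opp; simpl; field; auto).
  apply (is_RInt_derive (fun x => K * x ^ S n / INR (S n))).
  - intros x _. auto_derive; auto. simpl. field; auto.
  - intros x _. apply continuous_monomial.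
Qed.

Lemma RInt_abs_le (f g : R -> R) a b :
  a <= b -> (forall x, continuous f x) -> ex_RInt g a b ->
  (forall x, a < x < b -> Rabs (f x) <= g x) -> Rabs (RInt f a b) <= RInt g a b.
Proof.
  intros Hab Hf Hg H. eapply Rle_trans.
  - apply abs_RInt_le; auto. apply ex_RInt_of_continuous, Hf.
  - apply RInt_le; auto. apply ex_RInt_of_continuous.
    intros x. apply (continuous_comp f Rabs); auto. apply continuous_Rabs.
Qed.

Lemma RInt_ge0_of_continuous (f : R -> R) t :
  0 <= t -> (forall x, continuous f x) -> (forall x, 0 <= x -> 0 <= f x) -> 0 <= RInt f 0 t.
Proof.
  intros Ht Hf Hpos. apply RInt_ge_0; auto.
  - apply ex_RInt_of_continuous, Hf.
  - intros; apply Hpos; lra.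
Qed.

Lemma RInt_0_of_nonpos (f : R -> R) t :
  t <= 0 -> (forall x, x <= 0 -> f x = 0) -> RInt f 0 t = 0.
Proof.
  intros Ht Hf. rewrite (RInt_ext f (fun _ => 0)).
  - rewrite RInt_const. apply Rmult_0_r.
  - intros x Hx. rewrite Rmin_right, Rmax_left in Hx by lra. apply Hf; lra.
Qed.

Lemma pow_2_mul_ge0 x n : 0 <= x ^ (2 * n).
Proof. rewrite pow_mult. apply pow_le, pow2_ge_0. Qed.

Lemma is_lim_seq_of_abs_le (x e : nat -> R) l :
  (forall n, Rabs (x n - l) <= e n) -> is_lim_seq e 0 -> is_lim_seq x l.
Proof.
  intros H He. apply (is_lim_seq_le_le (fun n => l - e n) _ (fun n => l + e n)).
  - intros n. specialize (H n). apply Rabs_le_between in H. lra.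
  - replace (Finite l) with (Finite (l - 0)) by (f_equal; ring).
    apply is_lim_seq_minus'; [apply is_lim_seq_const | exact He].
  - replace (Finite l) with (Finite (l + 0)) by (f_equal; ring).
    apply is_lim_seq_plus'; [apply is_lim_seq_const | exact He].
Qed.

Lemma is_lim_seq_Series_tail (a : nat -> R) :
  ex_series a -> is_lim_seq (fun n => Series (fun i => a (S n + i)%nat)) 0.
Proof.
  intros Ha. apply (is_lim_seq_ext (fun n => Series a - sum_n a n)).
  { intros n. rewrite (Series_incr_n a (S n)) by (lia || exact Ha).
    simpl pred. rewrite sum_n_Reals. ring. }
  replace (Finite 0) with (Finite (Series a - Series a)) by (f_equal; ring).
  apply is_lim_seq_minus'; [apply is_lim_seq_const | apply Series_correct, Ha].
Qed.

(** * The integral operator *)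

(* [emden_op b] is the integral form of [u'' + (a-1)/t u' + c max(u,0)^p = 0], [u(0) = 1],
   [u'(0) = 0], with the convention [u = 1] on [t <= 0] (all integrands vanish there). *)
Section EmdenOperator.

Variables a c p : R.
Hypothesis Ha : 2 < a.
Hypothesis Hc : 0 < c.
Hypothesis Hp : 1 <= p.

Definition dens (b : R -> R) (t : R) := pospow t (a - 1) * pospow (b t) p.
Definition mass (b : R -> R) (t : R) := RInt (dens b) 0 t.
Definition flux (b : R -> R) (t : R) := pospow t (1 - a) * mass b t.
Definition emden_op (b : R -> R) (r : R) := 1 - c * RInt (flux b) 0 r.

Definition admissible (b : R -> R) := (forall x, continuous b x) /\ (forall x, b x <= 1).

Lemma continuous_dens b x : (forall y, continuous b y) -> continuous (dens b) x.
Proof.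
  intros Hb. apply continuous_Rmult; [apply continuous_pospow; lra |].
  apply (continuous_Rcomp b (fun y => pospow y p)); auto. apply continuous_pospow; lra.
Qed.

Lemma pospow_le_mul t s : 0 <= s <= t -> pospow s (a - 1) <= pospow t (a - 2) * s.
Proof.
  intros Hs. destruct (Rle_or_lt s 0).
  - rewrite pospow_of_nonpos by auto. replace s with 0 by lra. lra.
  - rewrite !pospow_of_pos by lra. replace (a - 1) with (a - 2 + 1) by ring.
    rewrite Rpower_plus, Rpower_1 by lra.
    apply Rmult_le_compat_r; [lra | apply Rle_Rpower_l; lra].
Qed.

Lemma pospow_mul_inv t : 0 < t -> pospow t (1 - a) * pospow t (a - 2) = / t.
Proof.
  intros Ht. rewrite !pospow_of_pos, <- Rpower_plus by auto.
  replace (1 - a + (a - 2)) with (- (1)) by ring. rewrite Rpower_Ropp, Rpower_1; auto.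
Qed.

Lemma is_derive_mass b t : (forall x, continuous b x) -> is_derive (mass b) t (dens b t).
Proof. intros Hb. apply is_derive_RInt_0. intros; apply continuous_dens, Hb. Qed.

Lemma continuous_mass b t : (forall x, continuous b x) -> continuous (mass b) t.
Proof. intros Hb. apply continuous_RInt_0. intros; apply continuous_dens, Hb. Qed.

Lemma mass_ge0 b t : (forall x, continuous b x) -> 0 <= t -> 0 <= mass b t.
Proof.
  intros Hb Ht. apply RInt_ge0_of_continuous; auto.
  - intros; apply continuous_dens, Hb.
  - intros; apply Rmult_le_pos; apply pospow_ge0.
Qed.

Lemma mass_le b t : admissible b -> 0 <= t -> mass b t <= pospow t (a - 2) * (t ^ 2 / 2).
Proof.
  intros [Hb Hb1] Ht. unfold mass.
  replace (pospow t (a - 2) * (t ^ 2 / 2))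
    with (RInt (fun x => pospow t (a - 2) * x ^ 1) 0 t)
    by (rewrite RInt_monomial; simpl; field).
  apply RInt_le; auto.
  - apply ex_RInt_of_continuous. intros; apply continuous_dens, Hb.
  - apply ex_RInt_of_continuous. intros; apply continuous_monomial.
  - intros x Hx. unfold dens. rewrite pow_1.
    assert (pospow (b x) p <= 1) by (apply pospow_le_1; auto; lra).
    pose proof (pospow_ge0 (b x) p). pose proof (pospow_ge0 x (a - 1)).
    assert (pospow x (a - 1) <= pospow t (a - 2) * x) by (apply pospow_le_mul; lra).
    nra.
Qed.

Lemma flux_of_nonpos b t : t <= 0 -> flux b t = 0.
Proof. intros; unfold flux; rewrite pospow_of_nonpos by auto; ring. Qed.

Lemma flux_bounds b t : admissible b -> 0 <= flux b t <= Rabs t / 2.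
Proof.
  intros Hb. destruct (Rle_or_lt t 0).
  - rewrite flux_of_nonpos by auto. pose proof (Rabs_pos t). lra.
  - pose proof (mass_ge0 b t (proj1 Hb) ltac:(lra)).
    pose proof (mass_le b t Hb ltac:(lra)).
    pose proof (pospow_ge0 t (1 - a)). unfold flux. split; [nra |].
    rewrite Rabs_pos_eq by lra.
    apply Rle_trans with (pospow t (1 - a) * (pospow t (a - 2) * (t ^ 2 / 2))).
    + apply Rmult_le_compat_l; auto.
    + rewrite <- Rmult_assoc, pospow_mul_inv by auto. right; field; lra.
Qed.

Lemma continuous_flux b t : admissible b -> continuous (flux b) t.
Proof.
  intros Hb. destruct (Rtotal_order t 0) as [Ht | [-> | Ht]].
  - apply (continuous_ext_loc _ (fun _ => 0)).
    + apply locally_of_neg; auto. intros; symmetry; apply flux_of_nonpos; lra.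
    + apply continuous_const.
  - (* [0 <= flux b y <= |y| / 2] squeezes [flux b] at [0] *)
    apply filterlim_locally. intros eps. exists eps. intros y Hy.
    change (Rabs (flux b y - flux b 0) < eps).
    change (Rabs (y - 0) < eps) in Hy. rewrite Rminus_0_r in Hy.
    rewrite (flux_of_nonpos b 0), Rminus_0_r by lra.
    destruct (flux_bounds b y Hb). rewrite Rabs_pos_eq by lra.
    pose proof (Rabs_pos y). lra.
  - apply continuous_Rmult; [| apply continuous_mass, Hb].
    apply (continuous_ext_loc _ (fun s => Rpower s (1 - a))).
    + apply locally_of_pos; auto. intros; symmetry; apply pospow_of_pos; auto.
    + apply continuous_Rpower, Ht.
Qed.

Lemma is_derive_emden_op b r : admissible b -> is_derive (emden_op b) r (- c * flux b r).
Proof.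
  intros Hb. unfold emden_op. apply (is_derive_eq _ _ (0 - c * flux b r)); [ring |].
  apply is_derive_Rminus; [apply (is_derive_const 1) |].
  apply is_derive_Rscal, is_derive_RInt_0. intros; apply continuous_flux, Hb.
Qed.

Lemma continuous_emden_op b r : admissible b -> continuous (emden_op b) r.
Proof.
  intros Hb. apply (ex_derive_continuous (emden_op b)). eexists; apply is_derive_emden_op, Hb.
Qed.

Lemma emden_op_of_nonpos b r : r <= 0 -> emden_op b r = 1.
Proof.
  intros Hr. unfold emden_op. rewrite RInt_0_of_nonpos; auto; [ring |].
  intros; apply flux_of_nonpos; auto.
Qed.

Lemma emden_op_le_1 b r : admissible b -> emden_op b r <= 1.
Proof.
  intros Hb. destruct (Rle_or_lt r 0); [rewrite emden_op_of_nonpos; lra |].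
  assert (0 <= RInt (flux b) 0 r).
  { apply RInt_ge0_of_continuous; [lra | |].
    - intros; apply continuous_flux, Hb.
    - intros; apply flux_bounds, Hb. }
  unfold emden_op. nra.
Qed.

Lemma emden_op_ge b r : admissible b -> 0 <= r -> 1 - c * r ^ 2 / 4 <= emden_op b r.
Proof.
  intros Hb Hr. unfold emden_op.
  assert (RInt (flux b) 0 r <= r ^ 2 / 4).
  { replace (r ^ 2 / 4) with (RInt (fun x => / 2 * x ^ 1) 0 r)
      by (rewrite RInt_monomial; simpl; field).
    apply RInt_le; auto.
    - apply ex_RInt_of_continuous. intros; apply continuous_flux, Hb.
    - apply ex_RInt_of_continuous. intros; apply continuous_monomial.
    - intros x Hx. destruct (flux_bounds b x Hb).
      rewrite Rabs_pos_eq in * by lra. rewrite pow_1. lra. }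
  nra.
Qed.

Lemma admissible_emden_op b : admissible b -> admissible (emden_op b).
Proof.
  intros Hb. split; intros; [apply continuous_emden_op | apply emden_op_le_1]; auto.
Qed.

Lemma emden_op_lipschitz b x y M :
  admissible b -> Rabs x <= M -> Rabs y <= M ->
  Rabs (emden_op b x - emden_op b y) <= c * M / 2 * Rabs (x - y).
Proof.
  intros Hb Hx Hy.
  destruct (MVT_gen (emden_op b) y x (fun t => - c * flux b t)) as [z [Hz ->]].
  - intros; apply is_derive_emden_op, Hb.
  - intros; apply continuity_pt_filterlim, continuous_emden_op, Hb.
  - rewrite Rabs_mult. apply Rmult_le_compat_r; [apply Rabs_pos |].
    destruct (flux_bounds b z Hb).
    rewrite Rabs_mult, Rabs_Ropp, (Rabs_pos_eq c), (Rabs_pos_eq (flux b z)) by lra.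
    assert (Rabs z <= M).
    { apply Rabs_le. apply Rabs_le_between in Hx. apply Rabs_le_between in Hy.
      revert Hz. unfold Rmin, Rmax. destruct (Rle_dec y x); lra. }
    nra.
Qed.

Section Difference.

Variables b1 b2 : R -> R.
Hypothesis Hb1 : admissible b1.
Hypothesis Hb2 : admissible b2.
Variables (K : R) (m : nat).
Hypothesis HK : 0 <= K.

Lemma mass_diff_le t :
  0 < t -> (forall s, 0 <= s <= t -> Rabs (b1 s - b2 s) <= K * s ^ (2 * m)) ->
  Rabs (mass b1 t - mass b2 t) <= pospow t (a - 2) * (p * K * t ^ (2 * m + 2) / INR (2 * m + 2)).
Proof.
  intros Ht Hdiff. unfold mass.
  rewrite <- (RInt_minus (V := R_CompleteNormedModule))
    by (apply ex_RInt_of_continuous; intros; apply continuous_dens; apply Hb1 || apply Hb2).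
  replace (pospow t (a - 2) * (p * K * t ^ (2 * m + 2) / INR (2 * m + 2)))
    with (RInt (fun x => pospow t (a - 2) * p * K * x ^ (2 * m + 1)) 0 t : R).
  2: { rewrite RInt_monomial. replace (S (2 * m + 1)) with (2 * m + 2)%nat by lia.
       field. apply not_0_INR; lia. }
  apply RInt_abs_le; [lra | | |].
  - intros; apply continuous_Rminus; apply continuous_dens; apply Hb1 || apply Hb2.
  - apply ex_RInt_of_continuous. intros; apply continuous_monomial.
  - intros x Hx. unfold dens. change (minus ?u ?v) with (u - v).
    rewrite <- Rmult_minus_distr_l, Rabs_mult, (Rabs_pos_eq (pospow x _)) by apply pospow_ge0.
    assert (Rabs (pospow (b1 x) p - pospow (b2 x) p) <= p * (K * x ^ (2 * m))).
    { eapply Rle_trans; [apply pospow_lipschitz; auto; apply Hb1 || apply Hb2 |].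
      apply Rmult_le_compat_l; [lra | apply Hdiff; lra]. }
    assert (pospow x (a - 1) <= pospow t (a - 2) * x) by (apply pospow_le_mul; lra).
    assert (0 <= p * (K * x ^ (2 * m))).
    { apply Rmult_le_pos; [lra | apply Rmult_le_pos; auto using pow_2_mul_ge0]. }
    apply Rle_trans with (pospow t (a - 2) * x * (p * (K * x ^ (2 * m)))).
    + apply Rmult_le_compat; auto using pospow_ge0, Rabs_pos.
    + right. rewrite pow_add, pow_1. ring.
Qed.

Lemma flux_diff_le t :
  0 < t -> (forall s, 0 <= s <= t -> Rabs (b1 s - b2 s) <= K * s ^ (2 * m)) ->
  Rabs (flux b1 t - flux b2 t) <= p * K / INR (2 * m + 2) * t ^ (2 * m + 1).
Proof.
  intros Ht Hdiff. unfold flux.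
  rewrite <- Rmult_minus_distr_l, Rabs_mult, Rabs_pos_eq by apply pospow_ge0.
  eapply Rle_trans.
  - apply Rmult_le_compat_l; [apply pospow_ge0 | apply mass_diff_le; auto].
  - rewrite <- Rmult_assoc, pospow_mul_inv by lra.
    replace (t ^ (2 * m + 2)) with (t ^ (2 * m + 1) * t)
      by (replace (2 * m + 2)%nat with (S (2 * m + 1)) by lia; simpl; ring).
    right. field. split; [apply not_0_INR; lia | lra].
Qed.

Lemma emden_op_diff_le r :
  0 <= r -> (forall s, 0 <= s <= r -> Rabs (b1 s - b2 s) <= K * s ^ (2 * m)) ->
  Rabs (emden_op b1 r - emden_op b2 r) <= c * p * K * r ^ (2 * m + 2) / INR (2 * m + 2) ^ 2.
Proof.
  intros Hr Hdiff. assert (Hm : 0 < INR (2 * m + 2)) by (apply lt_0_INR; lia).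
  unfold emden_op.
  replace (1 - c * RInt (flux b1) 0 r - (1 - c * RInt (flux b2) 0 r))
    with (c * (RInt (flux b2) 0 r - RInt (flux b1) 0 r)) by ring.
  rewrite <- (RInt_minus (V := R_CompleteNormedModule))
    by (apply ex_RInt_of_continuous; intros; apply continuous_flux; auto).
  rewrite Rabs_mult, Rabs_pos_eq by lra.
  replace (c * p * K * r ^ (2 * m + 2) / INR (2 * m + 2) ^ 2)
    with (c * (RInt (fun x => p * K / INR (2 * m + 2) * x ^ (2 * m + 1)) 0 r : R)).
  2: { rewrite RInt_monomial. replace (S (2 * m + 1)) with (2 * m + 2)%nat by lia.
       field; lra. }
  apply Rmult_le_compat_l; [lra |].
  apply RInt_abs_le; auto.
  - intros; apply continuous_Rminus; apply continuous_flux; auto.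
  - apply ex_RInt_of_continuous. intros; apply continuous_monomial.
  - intros x Hx. rewrite Rabs_minus_sym. apply flux_diff_le; [lra |].
    intros s Hs; apply Hdiff; lra.
Qed.

End Difference.

(* [K t^(2j)] times the [n]-th term of the exponential series of [c p t^2] *)
Definition picard_bound (K : R) (j n : nat) (t : R) :=
  K * (c * p) ^ n / INR (Factorial.fact n) * t ^ (2 * (n + j)).

Lemma picard_coef_ge0 K n : 0 <= K -> 0 <= K * (c * p) ^ n / INR (Factorial.fact n).
Proof.
  intros HK. pose proof (INR_fact_lt_0 n).
  apply Rmult_le_pos; [| left; apply Rinv_0_lt_compat; auto].
  apply Rmult_le_pos; [auto | apply pow_le; nra].
Qed.

Lemma picard_bound_ge0 K j n t : 0 <= K -> 0 <= picard_bound K j n t.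
Proof. intros HK. apply Rmult_le_pos; [apply picard_coef_ge0, HK | apply pow_2_mul_ge0]. Qed.

Lemma picard_bound_exp K j n t :
  picard_bound K j n t = K * t ^ (2 * j) * ((c * p * t ^ 2) ^ n / INR (Factorial.fact n)).
Proof.
  unfold picard_bound. rewrite Nat.mul_add_distr_l, pow_add, pow_mult, !Rpow_mult_distr.
  field. apply INR_fact_neq_0.
Qed.

Lemma ex_series_picard_bound K j t : ex_series (fun n => picard_bound K j n t).
Proof.
  apply (ex_series_ext (fun n => K * t ^ (2 * j) * ((c * p * t ^ 2) ^ n / INR (Factorial.fact n)))).
  { intros n; symmetry; apply picard_bound_exp. }
  apply (ex_series_scal (K * t ^ (2 * j)) (fun n => (c * p * t ^ 2) ^ n / INR (Factorial.fact n))).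
  exists (exp (c * p * t ^ 2)).
  pose proof (is_exp_Reals (c * p * t ^ 2)) as H. apply is_pseries_R in H.
  eapply is_series_ext; [| apply H]. intros n; simpl; unfold Rdiv; ring.
Qed.

Lemma picard_bound_le_compat K j n t s :
  0 <= K -> 0 <= t <= s -> picard_bound K j n t <= picard_bound K j n s.
Proof.
  intros HK Hts. apply Rmult_le_compat_l; [apply picard_coef_ge0, HK | apply pow_incr; lra].
Qed.

Lemma emden_op_diff_step b1 b2 K j n r :
  admissible b1 -> admissible b2 -> 0 <= r -> 0 <= K ->
  (forall s, 0 <= s <= r -> Rabs (b1 s - b2 s) <= picard_bound K j n s) ->
  Rabs (emden_op b1 r - emden_op b2 r) <= picard_bound K j (S n) r.
Proof.
  intros Hb1 Hb2 Hr HK Hdiff. unfold picard_bound in *.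
  set (K' := K * (c * p) ^ n / INR (Factorial.fact n)).
  assert (HK' : 0 <= K') by (apply picard_coef_ge0, HK).
  eapply Rle_trans; [apply (emden_op_diff_le b1 b2 Hb1 Hb2 K' (n + j)); auto |].
  (* the factor [1 / (n+1)] of the next factorial is beaten by [1 / (2(n+j)+2)^2] *)
  assert (Hm : 0 < INR (2 * (n + j) + 2)) by (apply lt_0_INR; lia).
  assert (Hfact : INR (S n) <= INR (2 * (n + j) + 2) ^ 2).
  { rewrite <- pow_INR. apply le_INR. simpl. lia. }
  replace (2 * (S n + j))%nat with (2 * (n + j) + 2)%nat by lia.
  replace (K * (c * p) ^ S n / INR (Factorial.fact (S n)))
    with (c * p * K' / INR (S n)).
  2: { unfold K'. rewrite fact_simpl, mult_INR, <- tech_pow_Rmult.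
       field. split; [apply INR_fact_neq_0 | apply not_0_INR; lia]. }
  pose proof (pow_2_mul_ge0 r (n + j + 1)) as Hr2.
  replace (2 * (n + j + 1))%nat with (2 * (n + j) + 2)%nat in Hr2 by lia.
  assert (Hcp : 0 <= c * p * K') by (apply Rmult_le_pos; nra).
  set (X := c * p * K' * r ^ (2 * (n + j) + 2)).
  assert (HX : 0 <= X) by (apply Rmult_le_pos; auto).
  replace (c * p * K' * r ^ (2 * (n + j) + 2) / INR (2 * (n + j) + 2) ^ 2)
    with (X * / INR (2 * (n + j) + 2) ^ 2) by (unfold X, Rdiv; ring).
  replace (c * p * K' / INR (S n) * r ^ (2 * (n + j) + 2)) with (X * / INR (S n))
    by (unfold X, Rdiv; ring).
  apply Rmult_le_compat_l; auto.
  apply Rinv_le_contravar; [apply lt_0_INR; lia | auto].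
Qed.

Lemma emden_op_iter_diff (f g : nat -> R -> R) K j r :
  (forall n, admissible (f n)) -> (forall n, admissible (g n)) ->
  (forall n t, f (S n) t = emden_op (f n) t) -> (forall n t, g (S n) t = emden_op (g n) t) ->
  0 <= K -> (forall t, 0 <= t <= r -> Rabs (f O t - g O t) <= K * t ^ (2 * j)) ->
  forall n t, 0 <= t <= r -> Rabs (f n t - g n t) <= picard_bound K j n t.
Proof.
  intros Hf Hg Ef Eg HK Hbase n. induction n as [| n IH]; intros t Ht.
  - unfold picard_bound. simpl. replace (K * 1 / 1) with K by field. apply Hbase, Ht.
  - rewrite Ef, Eg. apply emden_op_diff_step; auto; [lra |].
    intros s Hs. apply IH. lra.
Qed.

End EmdenOperator.

(** * Existence *)

Section Existence.

Variables a c p : R.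
Hypothesis Ha : 2 < a.
Hypothesis Hc : 0 < c.
Hypothesis Hp : 1 <= p.

Fixpoint picard (n : nat) : R -> R :=
  match n with
  | O => fun _ => 1
  | S n => emden_op a c p (picard n)
  end.

Lemma admissible_picard n : admissible (picard n).
Proof.
  induction n as [| n IH].
  - split; intros; [apply continuous_const | simpl; lra].
  - apply admissible_emden_op; auto.
Qed.

Lemma picard_of_nonpos n t : t <= 0 -> picard n t = 1.
Proof. intros Ht. destruct n; [reflexivity | apply emden_op_of_nonpos, Ht]. Qed.

Let picard_incr_bound := picard_bound c p (c / 4) 1.

Lemma picard_incr_le n t : Rabs (picard (S n) t - picard n t) <= picard_incr_bound n t.
Proof.
  destruct (Rle_or_lt t 0).
  - rewrite !picard_of_nonpos, Rminus_diag, Rabs_R0 by auto.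
    apply picard_bound_ge0; lra.
  - apply (emden_op_iter_diff a c p Ha Hc Hp (fun n => picard (S n)) picard _ _ t);
      auto using admissible_picard; [lra | | lra].
    intros s Hs. simpl. rewrite Rabs_minus_sym.
    pose proof (emden_op_le_1 a c p Ha Hc Hp _ s (admissible_picard 0)).
    pose proof (emden_op_ge a c p Ha Hc Hp _ s (admissible_picard 0) (proj1 Hs)).
    simpl in *. rewrite Rabs_pos_eq by lra. lra.
Qed.

Definition emden_sol (t : R) := 1 + Series (fun n => picard (S n) t - picard n t).

Lemma ex_series_picard_incr t : ex_series (fun n => picard (S n) t - picard n t).
Proof.
  apply (ex_series_le (K := R_AbsRing) (V := R_CompleteNormedModule) _
           (fun n => picard_incr_bound n t)).
  - intros n; apply picard_incr_le.
  - apply ex_series_picard_bound.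
Qed.

Lemma picard_telescope n t :
  picard (S n) t = 1 + sum_n (fun k => picard (S k) t - picard k t) n.
Proof.
  induction n as [| n IH].
  - rewrite sum_O. simpl. ring.
  - rewrite sum_Sn. change (plus ?x ?y) with (x + y). rewrite <- Rplus_assoc, <- IH. ring.
Qed.

Lemma is_lim_picard t : is_lim_seq (fun n => picard n t) (emden_sol t).
Proof.
  apply is_lim_seq_incr_1.
    apply (is_lim_seq_ext (fun n => 1 + sum_n (fun k => picard (S k) t - picard k t) n)).
  { intros n; symmetry; apply picard_telescope. }
  apply is_lim_seq_plus'; [apply is_lim_seq_const | apply Series_correct, ex_series_picard_incr].
Qed.

Lemma emden_sol_picard_le n t M :
  0 <= t <= M ->
  Rabs (emden_sol t - picard (S n) t) <= Series (fun i => picard_incr_bound (S n + i) M).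
Proof.
  intros Ht. unfold emden_sol. rewrite picard_telescope.
  rewrite (Series_incr_n _ (S n)) by (lia || apply ex_series_picard_incr).
  simpl pred. rewrite sum_n_Reals.
  match goal with
  | |- Rabs (1 + (?s + ?r) - (1 + ?s)) <= _ => replace (1 + (s + r) - (1 + s)) with r by ring
  end.
  assert (Hle : forall i, Rabs (picard (S (S n + i)) t - picard (S n + i) t)
                          <= picard_incr_bound (S n + i) M).
  { intros i. eapply Rle_trans; [apply picard_incr_le | apply picard_bound_le_compat; lra]. }
  assert (Hbd : ex_series (fun i => picard_incr_bound (S n + i) M)).
  { apply (ex_series_incr_n (fun i => picard_incr_bound i M)), ex_series_picard_bound. }
  eapply Rle_trans; [apply Series_Rabs | apply Series_le; auto].
  - apply (ex_series_le (K := R_AbsRing) (V := R_CompleteNormedModule) _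
      (fun i => picard_incr_bound (S n + i) M)); auto.
    intros i. change (Rabs (Rabs (picard (S (S n + i)) t - picard (S n + i) t))
                      <= picard_incr_bound (S n + i) M).
    rewrite Rabs_Rabsolu. apply Hle.
  - intros i. split; [apply Rabs_pos | apply Hle].
Qed.

Lemma emden_sol_le_1 t : emden_sol t <= 1.
Proof.
  apply (is_lim_seq_le (fun n => picard n t) (fun _ => 1) (emden_sol t) 1).
  - intros n; apply admissible_picard.
  - apply is_lim_picard.
  - apply is_lim_seq_const.
Qed.

Lemma emden_sol_lipschitz x y M :
  Rabs x <= M -> Rabs y <= M -> Rabs (emden_sol x - emden_sol y) <= c * M / 2 * Rabs (x - y).
Proof.
  intros Hx Hy.
  apply (is_lim_seq_le (fun n => Rabs (picard (S n) x - picard (S n) y))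
           (fun _ => c * M / 2 * Rabs (x - y))
           (Rabs (emden_sol x - emden_sol y)) (c * M / 2 * Rabs (x - y))).
  - intros n. apply emden_op_lipschitz; auto using admissible_picard.
  - apply (is_lim_seq_abs _ (emden_sol x - emden_sol y)).
    apply is_lim_seq_minus'; apply (is_lim_seq_incr_1 (fun n => picard n _)), is_lim_picard.
  - apply is_lim_seq_const.
Qed.

Lemma continuous_emden_sol x : continuous emden_sol x.
Proof.
  apply filterlim_locally. intros eps.
  set (M := Rabs x + 1). set (L := c * M / 2 + 1).
  assert (HM : 0 < M) by (unfold M; pose proof (Rabs_pos x); lra).
  assert (HL : c * M / 2 < L) by (unfold L; lra).
  assert (HL0 : 0 < L) by (pose proof (Rmult_lt_0_compat c M Hc HM); lra).
  assert (Hd : 0 < Rmin 1 (eps / L)).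
  { apply Rmin_pos; [lra | apply Rdiv_lt_0_compat; [apply cond_pos | lra]]. }
  exists (mkposreal _ Hd). intros y Hy.
  change (Rabs (y - x) < Rmin 1 (eps / L)) in Hy. change (Rabs (emden_sol y - emden_sol x) < eps).
  pose proof (Rmin_l 1 (eps / L)). pose proof (Rmin_r 1 (eps / L)).
  assert (Rabs y <= M).
  { unfold M. replace y with (x + (y - x)) by ring. pose proof (Rabs_triang x (y - x)). lra. }
  eapply Rle_lt_trans; [apply (emden_sol_lipschitz y x M); [assumption | unfold M; lra] |].
  apply Rle_lt_trans with (L * Rabs (y - x)).
  - apply Rmult_le_compat_r; [apply Rabs_pos | lra].
  - replace (pos eps) with (L * (eps / L)) by (field; lra).
    apply Rmult_lt_compat_l; lra.
Qed.

Lemma admissible_emden_sol : admissible emden_sol.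
Proof. split; [apply continuous_emden_sol | apply emden_sol_le_1]. Qed.

Lemma emden_sol_fixed t : emden_op a c p emden_sol t = emden_sol t.
Proof.
  assert (Hsol : is_lim_seq (fun n => picard (S (S n)) t) (emden_sol t)).
  { apply (is_lim_seq_incr_1 (fun n => picard (S n) t)), (is_lim_seq_incr_1 (fun n => picard n t)).
    apply is_lim_picard. }
  assert (Hop : is_lim_seq (fun n => picard (S (S n)) t) (emden_op a c p emden_sol t)).
  { destruct (Rle_or_lt t 0).
    - apply (is_lim_seq_ext (fun _ => emden_op a c p emden_sol t)); [| apply is_lim_seq_const].
      intros n. rewrite emden_op_of_nonpos, picard_of_nonpos by auto. reflexivity.
    - set (tail n := Series (fun i => picard_incr_bound (S n + i) t)).
      apply (is_lim_seq_of_abs_le _ (fun n => c * p * tail n * t ^ 2 / INR 2 ^ 2)).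
      + intros n. rewrite Rabs_minus_sym.
        assert (Htail : 0 <= tail n).
        { eapply Rle_trans; [apply Rabs_pos | apply (emden_sol_picard_le n t t); lra]. }
        apply (emden_op_diff_le a c p Ha Hc Hp _ _ admissible_emden_sol (admissible_picard (S n))
                 (tail n) 0 Htail t); [lra |].
        intros s Hs. rewrite Rmult_1_r. apply emden_sol_picard_le. lra.
      + replace (Finite 0) with (Rbar_mult (c * p / INR 2 ^ 2 * t ^ 2) 0) by (simpl; f_equal; ring).
        apply (is_lim_seq_ext (fun n => c * p / INR 2 ^ 2 * t ^ 2 * tail n)).
        { intros n. simpl. field. }
        apply is_lim_seq_scal_l. unfold tail.
        apply (is_lim_seq_Series_tail (fun i => picard_incr_bound i t)), ex_series_picard_bound. }
  apply is_lim_seq_unique in Hsol. apply is_lim_seq_unique in Hop.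
  rewrite Hsol in Hop. injection Hop; auto.
Qed.

End Existence.

Section FixedPoint.

Variables a c p : R.
Hypothesis Ha : 2 < a.
Hypothesis Hc : 0 < c.
Hypothesis Hp : 1 <= p.
Variable u : R -> R.
Hypothesis Hu : admissible u.
Hypothesis Hfix : forall t, emden_op a c p u t = u t.

Definition emden_deriv (t : R) := - c * flux a p u t.
Definition emden_deriv2 (t : R) :=
  - c * ((1 - a) * Rpower t (- a) * mass a p u t + pospow (u t) p).

Lemma is_derive_fixed t : is_derive u t (emden_deriv t).
Proof. apply (is_derive_ext (emden_op a c p u)); [apply Hfix | apply is_derive_emden_op; auto]. Qed.

Lemma continuous_emden_deriv t : continuous emden_deriv t.
Proof.
  apply continuous_Rmult; [apply continuous_const | apply continuous_flux; auto].
Qed.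

Lemma is_derive_emden_deriv t : 0 < t -> is_derive emden_deriv t (emden_deriv2 t).
Proof.
  intros Ht. unfold emden_deriv, emden_deriv2, flux.
  apply (is_derive_ext_loc (fun t => - c * (Rpower t (1 - a) * mass a p u t))).
  { apply locally_of_pos; auto. intros y Hy. rewrite pospow_of_pos; auto. }
  apply is_derive_Rscal.
  apply (is_derive_eq _ _ ((1 - a) * Rpower t (1 - a - 1) * mass a p u t
                           + Rpower t (1 - a) * dens a p u t)).
  { unfold dens. rewrite (pospow_of_pos t), <- Rmult_assoc, <- Rpower_plus by auto.
    replace (1 - a + (a - 1)) with 0 by ring. replace (1 - a - 1) with (- a) by ring.
    rewrite Rpower_O by auto. ring. }
  apply (is_derive_Rmult (fun t => Rpower t (1 - a)) (mass a p u)).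
  - apply is_derive_Rpower, Ht.
  - apply is_derive_mass; [lra | lra | apply Hu].
Qed.

Lemma continuous_emden_deriv2 t : 0 < t -> continuous emden_deriv2 t.
Proof.
  intros Ht. apply continuous_Rmult; [apply continuous_const |].
  apply continuous_Rplus.
  - apply continuous_Rmult; [apply continuous_Rmult |].
    + apply continuous_const.
    + apply continuous_Rpower, Ht.
    + apply continuous_mass; [lra | lra | apply Hu].
  - apply (continuous_Rcomp u (fun y => pospow y p)); [apply Hu | apply continuous_pospow; lra].
Qed.

Lemma emden_deriv_ode t :
  0 < t -> emden_deriv2 t + (a - 1) / t * emden_deriv t + c * pospow (u t) p = 0.
Proof.
  intros Ht. unfold emden_deriv2, emden_deriv, flux. rewrite (pospow_of_pos t) by auto.
  replace (Rpower t (- a)) with (Rpower t (1 - a) / t); [field; lra |].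
  replace (- a) with (1 - a + - (1)) by ring.
  rewrite Rpower_plus, Rpower_Ropp, Rpower_1 by auto. reflexivity.
Qed.

Lemma fixed_at_0 : u 0 = 1.
Proof. rewrite <- Hfix. apply emden_op_of_nonpos; lra. Qed.

Lemma fixed_ge t : 0 <= t -> 1 - c * t ^ 2 / 4 <= u t.
Proof. intros Ht. rewrite <- Hfix. apply emden_op_ge; auto. Qed.

Lemma fixed_nonincr x y : 0 <= x <= y -> u y <= u x.
Proof.
  intros Hxy. apply (le_of_is_derive_le0 u emden_deriv); [lra | | |].
  - intros; apply is_derive_fixed.
  - intros; apply Hu.
  - intros t _. unfold emden_deriv. destruct (flux_bounds a p Ha Hp u t Hu). nra.
Qed.

End FixedPoint.

(** * The Pohozaev identity *)

Section Pohozaev.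

Variables a c p : R.
Hypothesis Ha : 2 < a.
Hypothesis Hc : 0 < c.
Hypothesis Hp : 1 < p.
Hypothesis Hsub : (a - 2) * (p - 1) < 4.
Variable u : R -> R.
Hypothesis Hu : admissible u.
Hypothesis Hfix : forall t, emden_op a c p u t = u t.
Hypothesis Hpos : forall t, 0 < t -> 0 < u t.

Let Hp1 : 1 <= p. Proof. lra. Qed.
Let I := mass a p u.

Lemma fixed_pos t : 0 <= t -> 0 < u t.
Proof.
  intros Ht. destruct (Req_dec t 0) as [-> | ]; [rewrite (fixed_at_0 a c p u Hfix); lra |].
  apply Hpos; lra.
Qed.

Lemma is_derive_fixed_Rpower t : 0 < t -> is_derive u t (- c * Rpower t (1 - a) * I t).
Proof.
  intros Ht. apply (is_derive_eq _ _ (emden_deriv a c p u t)); [| apply is_derive_fixed; auto].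
  unfold emden_deriv, flux. rewrite pospow_of_pos by auto. unfold I. ring.
Qed.

Lemma fixed_mass_ge0 t : 0 <= t -> 0 <= I t.
Proof. apply mass_ge0; [lra | lra | apply Hu]. Qed.

Lemma mass_nondecr x y : 0 <= x <= y -> I x <= I y.
Proof.
  intros Hxy. apply (le_of_is_derive_ge0 I (dens a p u)); [lra | | |].
  - intros; apply is_derive_mass; [lra | lra | apply Hu].
  - intros; apply continuous_mass; [lra | lra | apply Hu].
  - intros; apply Rmult_le_pos; apply pospow_ge0.
Qed.

Lemma mass_ge r : 0 < r -> Rpower (u r) p * Rpower r a / a <= I r.
Proof.
  intros Hr. set (F := Rpower (u r) p).
  assert (HI0 : I 0 = 0) by (unfold I, mass; rewrite RInt_point; reflexivity).
  enough (I 0 - F * pospow 0 a / a <= I r - F * pospow r a / a) as H.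
  { rewrite HI0, (pospow_of_nonpos 0), (pospow_of_pos r) in H by lra. lra. }
  apply (le_of_is_derive_ge0 (fun t => I t - F * pospow t a / a)
           (fun t => dens a p u t - F * (a * Rpower t (a - 1)) / a)); [lra | | |].
  - intros t Ht. apply is_derive_Rminus; [apply is_derive_mass; [lra | lra | apply Hu] |].
    apply (is_derive_Rext (fun t => / a * (F * pospow t a))); [intros; field; lra |].
    apply (is_derive_eq _ _ (/ a * (F * (a * Rpower t (a - 1))))); [field; lra |].
    apply is_derive_Rscal, is_derive_Rscal, is_derive_pospow; lra.
  - intros t _. apply continuous_Rminus; [apply continuous_mass; [lra | lra | apply Hu] |].
    apply continuous_Rmult; [| apply continuous_const].
    apply continuous_Rmult; [apply continuous_const | apply continuous_pospow; lra].
  - intros t Ht. unfold dens.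
    rewrite (pospow_of_pos t), (pospow_of_pos (u t)) by (lra || (apply Hpos; lra)).
    assert (F <= Rpower (u t) p).
    { apply Rle_Rpower_l; [lra |]. split; [apply Hpos; lra |].
      apply (fixed_nonincr a c p); auto; lra. }
    pose proof (Rpower_pos t (a - 1)).
    replace (F * (a * Rpower t (a - 1)) / a) with (Rpower t (a - 1) * F) by (field; lra). nra.
Qed.

Definition decay_const := c * (p - 1) / (2 * a).

Lemma decay_const_pos : 0 < decay_const.
Proof. unfold decay_const. apply Rdiv_lt_0_compat; nra. Qed.

(* [(u^(1-p))' = (p-1) c r^(1-a) I / u^p >= (p-1) c r / a] by [mass_ge] *)
Lemma fixed_decay r : 0 <= r -> 1 + decay_const * r ^ 2 <= Rpower (u r) (1 - p).
Proof.
  intros Hr.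
  enough (Rpower (u 0) (1 - p) - decay_const * 0 ^ 2 <= Rpower (u r) (1 - p) - decay_const * r ^ 2)
    by (rewrite (fixed_at_0 a c p u Hfix), Rpower_base_1 in *; simpl in *; lra).
  apply (le_of_is_derive_ge0 (fun t => Rpower (u t) (1 - p) - decay_const * t ^ 2)
    (fun t => (1 - p) * Rpower (u t) (- p) * (- c * Rpower t (1 - a) * I t)
              - decay_const * (2 * t)));
    [lra | | |].
  - intros t Ht. apply is_derive_Rminus.
    + apply (is_derive_eq _ _
               ((1 - p) * Rpower (u t) (1 - p - 1) * (- c * Rpower t (1 - a) * I t)));
        [replace (1 - p - 1) with (- p) by ring; reflexivity |].
      apply (is_derive_Rcomp (fun y => Rpower y (1 - p)) u).
      * apply is_derive_Rpower, Hpos; lra.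
      * apply is_derive_fixed_Rpower; lra.
    + apply is_derive_Rscal. auto_derive; [auto | ring].
  - intros t Ht. apply continuous_Rminus.
    + apply (continuous_Rcomp u (fun y => Rpower y (1 - p))); [apply Hu |].
      apply continuous_Rpower, fixed_pos; lra.
    + apply continuous_monomial.
  - intros t Ht.
    assert (Hut := Hpos t ltac:(lra)). assert (HI := mass_ge t ltac:(lra)).
    assert (Hinv : Rpower (u t) (- p) * Rpower (u t) p = 1).
    { rewrite <- Rpower_plus. replace (- p + p) with 0 by ring. apply Rpower_O; lra. }
    assert (Ht1 : Rpower t (1 - a) * Rpower t a = t).
    { rewrite <- Rpower_plus. replace (1 - a + a) with 1 by ring. apply Rpower_1; lra. }
    assert (HA : 0 < Rpower (u t) (- p) * Rpower t (1 - a)).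
    { apply Rmult_lt_0_compat; apply Rpower_pos. }
    assert (Rpower (u t) (- p) * Rpower t (1 - a) * (Rpower (u t) p * Rpower t a / a) = t / a).
    { replace (Rpower (u t) (- p) * Rpower t (1 - a) * (Rpower (u t) p * Rpower t a / a))
        with (Rpower (u t) (- p) * Rpower (u t) p * (Rpower t (1 - a) * Rpower t a) / a)
        by (field; lra).
      rewrite Hinv, Ht1. field; lra. }
    assert (t / a <= Rpower (u t) (- p) * Rpower t (1 - a) * I t) by nra.
    unfold decay_const.
    replace ((1 - p) * Rpower (u t) (- p) * (- c * Rpower t (1 - a) * I t)
             - c * (p - 1) / (2 * a) * (2 * t))
      with ((p - 1) * c * (Rpower (u t) (- p) * Rpower t (1 - a) * I t - t / a)) by (field; lra).
    apply Rmult_le_pos; [nra | lra].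
Qed.

Lemma fixed_ge_mass r : 0 < r -> c * I r * Rpower (2 * r) (1 - a) * r <= u r.
Proof.
  intros Hr.
  destruct (MVT_gen u r (2 * r) (emden_deriv a c p u)) as [z [Hz Hm]].
  - intros; apply is_derive_fixed; auto.
  - intros; apply continuity_pt_filterlim, Hu.
  - rewrite Rmin_left, Rmax_right in Hz by lra.
    unfold emden_deriv, flux in Hm. rewrite (pospow_of_pos z) in Hm by lra.
    assert (Rpower (2 * r) (1 - a) <= Rpower z (1 - a)) by (apply Rle_Rpower_l_neg; lra).
    assert (I r <= mass a p u z) by (apply mass_nondecr; lra).
    assert (0 <= I r) by (apply fixed_mass_ge0; lra).
    assert (0 < u (2 * r)) by (apply Hpos; lra).
    pose proof (Rpower_pos (2 * r) (1 - a)).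
    assert (Rpower (2 * r) (1 - a) * I r <= Rpower z (1 - a) * mass a p u z)
      by (apply Rmult_le_compat; lra).
    assert (c * r * (Rpower (2 * r) (1 - a) * I r) <= c * r * (Rpower z (1 - a) * mass a p u z))
      by (apply Rmult_le_compat_l; nra).
    replace (2 * r - r) with r in Hm by ring. nra.
Qed.

(* The Pohozaev functional [r^a (u'^2/2 + c u^(p+1)/(p+1)) + (a-2)/2 r^(a-1) u u'],
   written with [r^(a-1) u' = - c I]. *)
Definition pohozaev (r : R) :=
  c ^ 2 / 2 * (Rpower r (2 - a) * (I r * I r)) - (a - 2) * c / 2 * (u r * I r)
  + c / (p + 1) * (Rpower r a * Rpower (u r) (p + 1)).

Definition pohozaev_rate := a / (p + 1) - (a - 2) / 2.

Lemma pohozaev_rate_pos : 0 < pohozaev_rate.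
Proof.
  replace pohozaev_rate with ((4 - (a - 2) * (p - 1)) / (2 * (p + 1)))
    by (unfold pohozaev_rate; field; lra).
  apply Rdiv_lt_0_compat; lra.
Qed.

Lemma is_derive_pohozaev r :
  0 < r -> is_derive pohozaev r (c * pohozaev_rate * Rpower r (a - 1) * Rpower (u r) (p + 1)).
Proof.
  intros Hr. assert (Hur := Hpos r Hr).
  set (X := Rpower r (1 - a)). set (Y := Rpower (u r) p).
  assert (HX : 0 < X) by apply Rpower_pos.
  assert (HX1 : Rpower r (2 - a) = r * X).
  { unfold X. replace (2 - a) with (1 + (1 - a)) by ring. rewrite Rpower_plus, Rpower_1; auto. }
  assert (HX2 : Rpower r (2 - a - 1) = X) by (unfold X; f_equal; ring).
  assert (HX3 : Rpower r (a - 1) = / X) by (unfold X; rewrite <- Rpower_Ropp; f_equal; ring).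
  assert (HX4 : Rpower r a = r * / X).
  { rewrite <- HX3. replace a with (1 + (a - 1)) at 1 by ring.
    rewrite Rpower_plus, Rpower_1; auto. }
  assert (HY1 : Rpower (u r) (p + 1) = u r * Y).
  { unfold Y. rewrite Rpower_plus, Rpower_1; auto. ring. }
  assert (HY2 : Rpower (u r) (p + 1 - 1) = Y) by (unfold Y; f_equal; ring).
  assert (Hq : dens a p u r = / X * Y).
  { unfold dens. rewrite (pospow_of_pos r), (pospow_of_pos (u r)), HX3 by auto. reflexivity. }
  assert (HI : is_derive I r (dens a p u r)) by (apply is_derive_mass; [lra | lra | apply Hu]).
  assert (Hd : is_derive pohozaev r
    (c ^ 2 / 2 * ((2 - a) * Rpower r (2 - a - 1) * (I r * I r)
                  + Rpower r (2 - a) * (dens a p u r * I r + I r * dens a p u r))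
     - (a - 2) * c / 2 * ((- c * Rpower r (1 - a) * I r) * I r + u r * dens a p u r)
     + c / (p + 1) * (a * Rpower r (a - 1) * Rpower (u r) (p + 1)
                      + Rpower r a * ((p + 1) * Rpower (u r) (p + 1 - 1)
                                      * (- c * Rpower r (1 - a) * I r))))).
  { unfold pohozaev. apply is_derive_Rplus; [apply is_derive_Rminus |]; apply is_derive_Rscal.
    - apply (is_derive_Rmult (fun r => Rpower r (2 - a)) (fun r => I r * I r));
        [apply is_derive_Rpower; auto | apply is_derive_Rmult; auto].
    - apply is_derive_Rmult; [apply is_derive_fixed_Rpower; auto | auto].
    - apply (is_derive_Rmult (fun r => Rpower r a) (fun r => Rpower (u r) (p + 1)));
        [apply is_derive_Rpower; auto |].
      apply (is_derive_Rcomp (fun y => Rpower y (p + 1)) u);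
        [apply is_derive_Rpower; auto | apply is_derive_fixed_Rpower; auto]. }
  eapply is_derive_eq; [| exact Hd].
  rewrite Hq, HX1, HX2, HX3, HX4, HY1, HY2. fold X. unfold pohozaev_rate. field. lra.
Qed.

Lemma pohozaev_incr x y : 0 < x < y -> pohozaev x < pohozaev y.
Proof.
  intros Hxy.
  apply (incr_function pohozaev 0 p_infty
          (fun r => c * pohozaev_rate * Rpower r (a - 1) * Rpower (u r) (p + 1)));
    simpl; try lra.
  - intros r Hr _. apply is_derive_pohozaev, Hr.
  - intros r Hr _. pose proof pohozaev_rate_pos.
    pose proof (Rpower_pos r (a - 1)). pose proof (Rpower_pos (u r) (p + 1)).
    apply Rlt_gt, Rmult_lt_0_compat; [apply Rmult_lt_0_compat |]; nra.
Qed.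

Lemma pohozaev_ge r : 0 < r <= 1 -> - ((a - 2) * c / 4) * r ^ 2 <= pohozaev r.
Proof.
  intros Hr. unfold pohozaev.
  assert (0 <= I r) by (apply fixed_mass_ge0; lra).
  assert (I r <= r ^ 2 / 2).
  { eapply Rle_trans; [apply mass_le; [lra | lra | apply Hu | lra] |].
    assert (pospow r (a - 2) <= 1) by (apply pospow_le_1; lra).
    pose proof (pospow_ge0 r (a - 2)). assert (0 <= r ^ 2 / 2) by nra. nra. }
  assert (0 < u r) by (apply Hpos; lra). assert (u r <= 1) by apply Hu.
  assert (0 <= c ^ 2 / 2 * (Rpower r (2 - a) * (I r * I r))).
  { pose proof (Rpower_pos r (2 - a)). apply Rmult_le_pos; [nra | apply Rmult_le_pos; nra]. }
  assert (0 <= c / (p + 1) * (Rpower r a * Rpower (u r) (p + 1))).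
  { pose proof (Rpower_pos r a). pose proof (Rpower_pos (u r) (p + 1)).
    apply Rmult_le_pos; [apply Rdiv_le_0_compat | apply Rmult_le_pos]; lra. }
  assert (u r * I r <= r ^ 2 / 2) by nra.
  assert (0 <= (a - 2) * c / 2) by (apply Rdiv_le_0_compat; nra).
  nra.
Qed.

Lemma pohozaev_pos r : 0 < r -> 0 < pohozaev r.
Proof.
  intros Hr. assert (pohozaev (r / 2) < pohozaev r) by (apply pohozaev_incr; lra).
  enough (0 <= pohozaev (r / 2)) by lra.
  (* [pohozaev (r/2) >= pohozaev e >= - M e^2] for every small [e > 0] *)
  set (s := r / 2). assert (Hs : 0 < s) by (unfold s; lra). clearbody s.
  destruct (Rle_or_lt 0 (pohozaev s)) as [| Hneg]; auto. exfalso.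
  set (M := (a - 2) * c / 4). assert (HM : 0 < M) by (unfold M; apply Rdiv_lt_0_compat; nra).
  pose proof (Rmin_l (Rmin (s / 2) 1) (- pohozaev s / (2 * M))).
  pose proof (Rmin_r (Rmin (s / 2) 1) (- pohozaev s / (2 * M))).
  pose proof (Rmin_l (s / 2) 1). pose proof (Rmin_r (s / 2) 1).
  set (e := Rmin (Rmin (s / 2) 1) (- pohozaev s / (2 * M))) in *.
  assert (He : 0 < e) by (repeat apply Rmin_pos; try apply Rdiv_lt_0_compat; lra).
  assert (Hge := pohozaev_ge e ltac:(lra)). assert (Hincr := pohozaev_incr e s ltac:(lra)).
  fold M in Hge.
  assert (M * e <= - pohozaev s / 2).
  { apply Rle_trans with (M * (- pohozaev s / (2 * M))); [apply Rmult_le_compat_l; lra |].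
    right; field; lra. }
  assert (e ^ 2 <= e) by (simpl; nra).
  nra.
Qed.

Lemma mass_le_fixed r : 0 < r -> c * I r <= Rpower 2 (a - 1) * Rpower r (a - 2) * u r.
Proof.
  intros Hr. pose proof (fixed_ge_mass r Hr) as H.
  set (Q := Rpower 2 (a - 1) * Rpower r (a - 2)).
  assert (HQ : 0 < Q) by (apply Rmult_lt_0_compat; apply Rpower_pos).
  assert (EQ : Rpower (2 * r) (1 - a) * r * Q = 1).
  { unfold Q. rewrite <- Rpower_mult_distr by lra. rewrite <- (Rpower_1 r) at 2 by exact Hr.
    replace (Rpower 2 (1 - a) * Rpower r (1 - a) * Rpower r 1
             * (Rpower 2 (a - 1) * Rpower r (a - 2)))
      with (Rpower 2 (1 - a + (a - 1)) * Rpower r (1 - a + 1 + (a - 2)))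
      by (rewrite !Rpower_plus; ring).
    replace (1 - a + (a - 1)) with 0 by ring. replace (1 - a + 1 + (a - 2)) with 0 by ring.
    rewrite !Rpower_O by lra. ring. }
  assert (E : c * I r * Rpower (2 * r) (1 - a) * r * Q = c * I r).
  { transitivity (c * I r * (Rpower (2 * r) (1 - a) * r * Q)); [ring | rewrite EQ; ring]. }
  rewrite <- E.
  rewrite (Rmult_comm Q (u r)). apply Rmult_le_compat_r; lra.
Qed.

Lemma fixed_pow_le r : 0 <= r -> decay_const * r ^ 2 * Rpower (u r) p <= u r.
Proof.
  intros Hr. assert (Hur := fixed_pos r Hr).
  assert (Hsplit : Rpower (u r) p * Rpower (u r) (1 - p) = u r).
  { rewrite <- Rpower_plus. replace (p + (1 - p)) with 1 by ring. apply Rpower_1, Hur. }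
  pose proof (fixed_decay r Hr). pose proof (Rpower_pos (u r) p). nra.
Qed.

Lemma fixed_sq_le r :
  0 < r -> u r ^ 2 <= Rpower decay_const (2 / (1 - p)) * Rpower r (4 / (1 - p)).
Proof.
  intros Hr. assert (Hur := Hpos r Hr). pose proof decay_const_pos.
  assert (Hr2 : 0 < decay_const * r ^ 2) by (apply Rmult_lt_0_compat; [lra | apply pow_lt, Hr]).
  assert (Hdec : decay_const * r ^ 2 <= Rpower (u r) (1 - p))
    by (pose proof (fixed_decay r ltac:(lra)); lra).
  assert (u r <= Rpower (decay_const * r ^ 2) (/ (1 - p))).
  { rewrite <- (Rpower_Rpower_inv (u r) (1 - p)) by lra.
    apply Rle_Rpower_l_neg; [lra |]. left; apply Rinv_lt_0_compat; lra. }
  replace (Rpower decay_const (2 / (1 - p)) * Rpower r (4 / (1 - p)))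
    with (Rpower (decay_const * r ^ 2) (/ (1 - p)) ^ 2).
  - apply pow_incr. lra.
  - rewrite <- Rpower_pow, Rpower_mult, <- Rpower_mult_distr, <- (Rpower_pow 2 r), Rpower_mult
      by (apply Rpower_pos || lra || (apply pow_lt; lra)).
    simpl (INR 2). f_equal; f_equal; field; lra.
Qed.

Definition pohozaev_const := Rpower 2 (a - 1) ^ 2 / 2 + c / ((p + 1) * decay_const).

Lemma pohozaev_le_sq r : 0 < r -> pohozaev r <= pohozaev_const * Rpower r (a - 2) * u r ^ 2.
Proof.
  intros Hr. assert (Hur := Hpos r Hr). pose proof decay_const_pos.
  assert (HI := fixed_mass_ge0 r ltac:(lra)). assert (HcI := mass_le_fixed r Hr).
  set (S := Rpower r (a - 2)) in *. assert (HS : 0 < S) by apply Rpower_pos.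
  assert (ES1 : Rpower r (2 - a) = / S).
  { unfold S. rewrite <- Rpower_Ropp. f_equal; ring. }
  assert (ES2 : Rpower r a = S * r ^ 2).
  { unfold S. rewrite <- (Rpower_pow 2 r), <- Rpower_plus by lra. simpl (INR 2). f_equal; ring. }
  assert (EU : Rpower (u r) (p + 1) = u r * Rpower (u r) p).
  { rewrite Rpower_plus, Rpower_1 by lra. ring. }
  assert (Hkin : c ^ 2 / 2 * (/ S * (I r * I r)) <= Rpower 2 (a - 1) ^ 2 / 2 * S * u r ^ 2).
  { replace (c ^ 2 / 2 * (/ S * (I r * I r))) with (/ (2 * S) * ((c * I r) * (c * I r)))
      by (field; lra).
    replace (Rpower 2 (a - 1) ^ 2 / 2 * S * u r ^ 2)
      with (/ (2 * S) * ((Rpower 2 (a - 1) * S * u r) * (Rpower 2 (a - 1) * S * u r)))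
      by (field; lra).
    apply Rmult_le_compat_l; [left; apply Rinv_0_lt_compat; lra |].
    assert (0 <= c * I r) by (apply Rmult_le_pos; lra).
    apply Rmult_le_compat; lra. }
  assert (Hpot : c / (p + 1) * (S * r ^ 2 * (u r * Rpower (u r) p))
                 <= c / ((p + 1) * decay_const) * S * u r ^ 2).
  { pose proof (fixed_pow_le r ltac:(lra)).
    replace (c / (p + 1) * (S * r ^ 2 * (u r * Rpower (u r) p)))
      with (c / ((p + 1) * decay_const) * S * u r * (decay_const * r ^ 2 * Rpower (u r) p))
      by (field; lra).
    replace (c / ((p + 1) * decay_const) * S * u r ^ 2)
      with (c / ((p + 1) * decay_const) * S * u r * u r) by ring.
    apply Rmult_le_compat_l; [| assumption].
    apply Rmult_le_pos; [apply Rmult_le_pos |]; [apply Rdiv_le_0_compat | |]; nra. }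
  assert (0 <= (a - 2) * c / 2 * (u r * I r)).
  { apply Rmult_le_pos; [apply Rdiv_le_0_compat |]; nra. }
  unfold pohozaev, pohozaev_const. fold I S. rewrite ES1, ES2, EU. lra.
Qed.

Lemma fixed_not_pos : False.
Proof.
  set (ee := a - 2 + 4 / (1 - p)).
  set (C := pohozaev_const * Rpower decay_const (2 / (1 - p))).
  assert (Hee : ee < 0).
  { unfold ee. replace (4 / (1 - p)) with (- (4 / (p - 1))) by (field; lra).
    enough (a - 2 < 4 / (p - 1)) by lra.
    apply Rmult_lt_reg_r with (p - 1); [lra |]. field_simplify; lra. }
  assert (HC : 0 < C).
  { pose proof decay_const_pos. apply Rmult_lt_0_compat; [| apply Rpower_pos].
    unfold pohozaev_const. apply Rplus_lt_0_compat.
    - pose proof (pow_lt _ 2 (Rpower_pos 2 (a - 1))). lra.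
    - apply Rdiv_lt_0_compat; [lra | apply Rmult_lt_0_compat; lra]. }
  assert (Hle : forall r, 0 < r -> pohozaev r <= C * Rpower r ee).
  { intros r Hr. eapply Rle_trans; [apply pohozaev_le_sq, Hr |].
    pose proof (Rpower_pos r (a - 2)). pose proof (fixed_sq_le r Hr).
    assert (0 <= pohozaev_const * Rpower r (a - 2)).
    { apply Rmult_le_pos; [| lra]. pose proof decay_const_pos. unfold pohozaev_const.
      apply Rplus_le_le_0_compat; [pose proof (pow2_ge_0 (Rpower 2 (a - 1))); lra |].
      apply Rdiv_le_0_compat; nra. }
    apply Rle_trans with (pohozaev_const * Rpower r (a - 2)
                          * (Rpower decay_const (2 / (1 - p)) * Rpower r (4 / (1 - p)))).
    - apply Rmult_le_compat_l; auto.
    - right. unfold C, ee. rewrite Rpower_plus. ring. }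
  (* [pohozaev] is increasing and positive, while [C r^ee -> 0] as [ee < 0] *)
  assert (HP1 := pohozaev_pos 1 ltac:(lra)).
  set (B := Rpower (pohozaev 1 / (2 * C)) (/ ee)).
  assert (HB : 0 < B) by apply Rpower_pos.
  assert (Rpower (1 + B) ee < Rpower B ee) by (apply Rlt_Rpower_l_neg; lra).
  assert (Rpower B ee = pohozaev 1 / (2 * C)).
  { unfold B. rewrite Rpower_mult, Rinv_l, Rpower_1 by (lra || apply Rdiv_lt_0_compat; lra).
    reflexivity. }
  assert (pohozaev 1 < pohozaev (1 + B)) by (apply pohozaev_incr; lra).
  assert (pohozaev (1 + B) <= C * Rpower (1 + B) ee) by (apply Hle; lra).
  assert (C * Rpower (1 + B) ee < C * (pohozaev 1 / (2 * C))) by (apply Rmult_lt_compat_l; lra).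
  replace (C * (pohozaev 1 / (2 * C))) with (pohozaev 1 / 2) in * by (field; lra).
  lra.
Qed.

End Pohozaev.

(** * Uniqueness *)

Section EmdenUniqueness.

Variables a c p : R.
Hypothesis Ha : 2 < a.
Hypothesis Hc : 0 < c.
Hypothesis Hp : 1 <= p.

Lemma fixed_point_unique u1 u2 :
  admissible u1 -> admissible u2 ->
  (forall t, emden_op a c p u1 t = u1 t) -> (forall t, emden_op a c p u2 t = u2 t) ->
  forall t, 0 <= t -> u1 t = u2 t.
Proof.
  intros Hu1 Hu2 Hf1 Hf2 t Ht. set (K := c * t ^ 2 / 4).
  assert (HK : 0 <= K) by (unfold K; pose proof (pow2_ge_0 t); nra).
  assert (Hbound : forall n, Rabs (u1 t - u2 t) <= picard_bound c p K 0 n t).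
  { intros n. apply (emden_op_iter_diff a c p Ha Hc Hp (fun _ => u1) (fun _ => u2) K 0 t);
      auto; [| lra].
    intros s Hs. rewrite <- (Hf1 s), <- (Hf2 s).
    pose proof (emden_op_le_1 a c p Ha Hc Hp u1 s Hu1).
    pose proof (emden_op_le_1 a c p Ha Hc Hp u2 s Hu2).
    pose proof (emden_op_ge a c p Ha Hc Hp u1 s Hu1 (proj1 Hs)).
    pose proof (emden_op_ge a c p Ha Hc Hp u2 s Hu2 (proj1 Hs)).
    assert (s ^ 2 <= t ^ 2) by (apply pow_incr; lra).
    simpl. rewrite Rmult_1_r. unfold K. apply Rabs_le. split; nra. }
  assert (Hlim := ex_series_lim_0 _ (ex_series_picard_bound c p K 0 t)).
  assert (Habs : Rabs (u1 t - u2 t) <= 0).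
  { apply (is_lim_seq_le (fun _ => Rabs (u1 t - u2 t)) (fun n => picard_bound c p K 0 n t)
             (Rabs (u1 t - u2 t)) 0); auto using is_lim_seq_const. }
  pose proof (Rabs_pos (u1 t - u2 t)).
  assert (Hzero : Rabs (u1 t - u2 t) = 0) by lra. apply Rabs_eq_0 in Hzero. lra.
Qed.

(* [f'(r) >= m r^(1-a)] integrates to [f(e) <= f(d) - m (e^(2-a) - d^(2-a)) / (a-2)], which tends
   to [-oo] as [e -> 0]. *)
Lemma not_continuous_of_singular_deriv (f df : R -> R) m d :
  0 < m -> 0 < d -> continuous f 0 ->
  (forall r, 0 < r <= d -> is_derive f r (df r)) ->
  (forall r, 0 < r <= d -> m * Rpower r (1 - a) <= df r) -> False.
Proof.
  intros Hm Hd Hc0 Hder Hge.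
  apply filterlim_locally with (eps := mkposreal 1 Rlt_0_1) in Hc0. destruct Hc0 as [eta Heta].
  set (Q := (a - 2) / m * (f d - f 0 + 1) + Rpower d (2 - a)).
  set (Q' := Rabs Q + 1).
  assert (HQ : Q < Q') by (unfold Q'; pose proof (Rle_abs Q); lra).
  assert (HQ' : 0 < Q') by (unfold Q'; pose proof (Rabs_pos Q); lra).
  pose proof (Rpower_pos Q' (/ (2 - a))). pose proof (cond_pos eta).
  pose proof (Rmin_l (Rmin d (eta / 2)) (Rpower Q' (/ (2 - a)))).
  pose proof (Rmin_r (Rmin d (eta / 2)) (Rpower Q' (/ (2 - a)))).
  pose proof (Rmin_l d (eta / 2)). pose proof (Rmin_r d (eta / 2)).
  set (e := Rmin (Rmin d (eta / 2)) (Rpower Q' (/ (2 - a)))) in *.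
  assert (He : 0 < e) by (unfold e; repeat apply Rmin_pos; lra).
  assert (HeQ : Q' <= Rpower e (2 - a)).
  { rewrite <- (Rpower_inv_Rpower Q' (2 - a)) at 1 by lra.
    apply Rle_Rpower_l_neg; lra. }
  assert (Hmono : f e + m / (a - 2) * Rpower e (2 - a) <= f d + m / (a - 2) * Rpower d (2 - a)).
  { apply (le_of_is_derive_ge0 (fun x => f x + m / (a - 2) * Rpower x (2 - a))
             (fun x => df x - m * Rpower x (1 - a))); [lra | | |].
    - intros x Hx. apply (is_derive_eq _ _ (df x + m / (a - 2) * ((2 - a) * Rpower x (2 - a - 1)))).
      { replace (2 - a - 1) with (1 - a) by ring. field; lra. }
      apply is_derive_Rplus; [apply Hder; lra |].
      apply is_derive_Rscal, is_derive_Rpower; lra.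
    - intros x Hx. apply continuous_Rplus.
      + apply (ex_derive_continuous f). eexists; apply Hder; lra.
      + apply continuous_Rmult; [apply continuous_const | apply continuous_Rpower; lra].
    - intros x Hx. pose proof (Hge x ltac:(lra)). lra. }
  assert (Hfe : Rabs (f e - f 0) < 1).
  { apply Heta. change (Rabs (e - 0) < eta). rewrite Rminus_0_r, Rabs_pos_eq; lra. }
  apply Rabs_def2 in Hfe.
  assert (Rpower e (2 - a) <= Q).
  { unfold Q. apply Rmult_le_reg_l with (m / (a - 2)); [apply Rdiv_lt_0_compat; lra |].
    replace (m / (a - 2) * ((a - 2) / m * (f d - f 0 + 1) + Rpower d (2 - a)))
      with (f d - f 0 + 1 + m / (a - 2) * Rpower d (2 - a)) by (field; lra).
    lra. }
  lra.
Qed.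

Section OdeSolution.

Variables w w1 w2 : R -> R.
Hypothesis Hd1 : forall r, 0 < r -> is_derive w r (w1 r).
Hypothesis Hd2 : forall r, 0 < r -> is_derive w1 r (w2 r).
Hypothesis Hode : forall r, 0 < r -> w2 r + (a - 1) / r * w1 r + c * pospow (w r) p = 0.
Hypothesis Hneg : forall r, r <= 0 -> w r = 1.
Hypothesis Hcont0 : continuous w 0.

Lemma continuous_ode_sol x : continuous w x.
Proof.
  destruct (Rtotal_order x 0) as [Hx | [-> | Hx]]; auto.
  - apply (continuous_ext_loc _ (fun _ => 1)); [| apply continuous_const].
    apply locally_of_neg; auto. intros; symmetry; apply Hneg; lra.
  - apply (ex_derive_continuous w). eexists; apply Hd1, Hx.
Qed.

Let I := mass a p w.

Lemma is_derive_ode_mass t : is_derive I t (dens a p w t).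
Proof. apply is_derive_mass; [lra | lra | apply continuous_ode_sol]. Qed.

(* [(r^(a-1) w')' = - c r^(a-1) w^p = - c I'] *)
Lemma ode_first_integral r :
  0 < r -> Rpower r (a - 1) * w1 r + c * I r = Rpower 1 (a - 1) * w1 1 + c * I 1.
Proof.
  intros Hr. set (z := fun r => Rpower r (a - 1) * w1 r + c * I r).
  assert (Hz : forall t, 0 < t -> is_derive z t 0).
  { intros t Ht. unfold z.
    apply (is_derive_eq _ _ (((a - 1) * Rpower t (a - 1 - 1) * w1 t + Rpower t (a - 1) * w2 t)
                             + c * dens a p w t)).
    - unfold dens. rewrite (pospow_of_pos t) by auto.
      replace (a - 1 - 1) with (a - 1 + - (1)) by ring.
      rewrite Rpower_plus, Rpower_Ropp, Rpower_1 by auto.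
      transitivity (Rpower t (a - 1) * (w2 t + (a - 1) / t * w1 t + c * pospow (w t) p));
        [field; lra | rewrite Hode by auto; ring].
    - apply is_derive_Rplus; [| apply is_derive_Rscal, is_derive_ode_mass].
      apply (is_derive_Rmult (fun t => Rpower t (a - 1)) w1);
        [apply is_derive_Rpower | apply Hd2]; auto. }
  assert (Hzc : forall t, 0 < t -> continuous z t).
  { intros t Ht. apply (ex_derive_continuous z). eexists; apply Hz, Ht. }
  change (z r = z 1). destruct (Rle_or_lt r 1).
  - apply eq_of_is_derive_0; auto; intros; [apply Hz | apply Hzc]; lra.
  - symmetry. apply eq_of_is_derive_0; [lra | |]; intros; [apply Hz | apply Hzc]; lra.
Qed.

Let K := Rpower 1 (a - 1) * w1 1 + c * I 1.

Lemma ode_deriv_eq r : 0 < r -> w1 r = Rpower r (1 - a) * (K - c * I r).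
Proof.
  intros Hr. unfold K. rewrite <- (ode_first_integral r Hr).
  replace (Rpower r (1 - a) * (Rpower r (a - 1) * w1 r + c * I r - c * I r))
    with (Rpower r (1 - a) * Rpower r (a - 1) * w1 r) by ring.
  rewrite <- Rpower_plus. replace (1 - a + (a - 1)) with 0 by ring. rewrite Rpower_O; lra.
Qed.

(* A nonzero [K] would make [w'] behave like [K r^(1-a)], not integrable at [0]. *)
Lemma ode_first_integral_0 : K = 0.
Proof.
  assert (HI0 : I 0 = 0) by (unfold I, mass; rewrite RInt_point; reflexivity).
  destruct (Rtotal_order K 0) as [HK | [HK | HK]]; auto; exfalso.
  - apply (not_continuous_of_singular_deriv (fun x => - w x) (fun x => - w1 x) (- K) 1); try lra.
    + apply (continuous_opp w); auto.
    + intros r Hr. apply (is_derive_opp w); apply Hd1; lra.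
    + intros r Hr. rewrite ode_deriv_eq by lra. pose proof (Rpower_pos r (1 - a)).
      assert (0 <= I r) by (apply mass_ge0; [lra | lra | apply continuous_ode_sol | lra]).
      assert (0 <= Rpower r (1 - a) * (c * I r)) by (apply Rmult_le_pos; nra).
      nra.
  - assert (Hs := continuous_mass a p Ha Hp w 0 continuous_ode_sol).
    apply filterlim_locally with (eps := mkposreal (K / (2 * c)) ltac:(apply Rdiv_lt_0_compat; lra))
      in Hs.
    destruct Hs as [eta Heta]. pose proof (cond_pos eta).
    apply (not_continuous_of_singular_deriv w w1 (K / 2) (eta / 2)); try lra; auto.
    + intros r Hr; apply Hd1; lra.
    + intros r Hr. rewrite ode_deriv_eq by lra.
      assert (Hb : Rabs (I r - I 0) < K / (2 * c)).
      { apply Heta. change (Rabs (r - 0) < eta). rewrite Rminus_0_r, Rabs_pos_eq; lra. }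
      rewrite HI0, Rminus_0_r in Hb. apply Rabs_def2 in Hb.
      assert (c * I r < K / 2).
      { replace (K / 2) with (c * (K / (2 * c))) by (field; lra). apply Rmult_lt_compat_l; lra. }
      pose proof (Rpower_pos r (1 - a)). nra.
Qed.

Lemma ode_deriv_flux r : 0 < r -> w1 r = - c * flux a p w r.
Proof.
  intros Hr. rewrite ode_deriv_eq, ode_first_integral_0 by auto.
  unfold flux. rewrite pospow_of_pos by auto. fold I. ring.
Qed.

Lemma admissible_ode_sol : admissible w.
Proof.
  split; [apply continuous_ode_sol |]. intros x.
  destruct (Rle_or_lt x 0); [rewrite Hneg; lra |].
  rewrite <- (Hneg 0) by lra.
  apply (le_of_is_derive_le0 w w1);
    [lra | intros; apply Hd1; lra | intros; apply continuous_ode_sol |].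
  intros t Ht. rewrite ode_deriv_flux by lra.
  assert (0 <= flux a p w t).
  { unfold flux. apply Rmult_le_pos; [apply pospow_ge0 |].
    apply mass_ge0; [lra | lra | apply continuous_ode_sol | lra]. }
  nra.
Qed.

Lemma ode_sol_fixed t : emden_op a c p w t = w t.
Proof.
  destruct (Rle_or_lt t 0); [rewrite emden_op_of_nonpos, Hneg; auto |].
  enough (Heq : w 0 - emden_op a c p w 0 = w t - emden_op a c p w t)
    by (rewrite emden_op_of_nonpos, Hneg in Heq by lra; lra).
  apply (eq_of_is_derive_0 (fun x => w x - emden_op a c p w x)); [lra | |].
  - intros x Hx. apply (is_derive_eq _ _ (w1 x - (- c * flux a p w x))).
    { rewrite ode_deriv_flux by lra. ring. }
    apply is_derive_Rminus; [apply Hd1; lra | apply is_derive_emden_op, admissible_ode_sol; lra].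
  - intros x _. apply continuous_Rminus; [apply continuous_ode_sol |].
    apply continuous_emden_op; [lra | lra | apply admissible_ode_sol].
Qed.

End OdeSolution.

End EmdenUniqueness.

(** * The change of variables *)

Section PowerTransform.

Variables A B : R.
Variables u u1 u2 : R -> R.
Hypothesis Hu1 : forall s, 0 < s -> is_derive u s (u1 s).
Hypothesis Hu2 : forall s, 0 < s -> is_derive u1 s (u2 s).

Definition power_transform (r : R) := Rpower r A * u (Rpower r B).

Definition power_transform_d1 (r : R) :=
  A * Rpower r (A - 1) * u (Rpower r B) + Rpower r A * (u1 (Rpower r B) * (B * Rpower r (B - 1))).

Definition power_transform_d2 (r : R) :=
  A * (A - 1) * Rpower r (A - 2) * u (Rpower r B)
  + A * Rpower r (A - 1) * (u1 (Rpower r B) * (B * Rpower r (B - 1)))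
  + (A * Rpower r (A - 1) * (u1 (Rpower r B) * (B * Rpower r (B - 1)))
     + Rpower r A * (u2 (Rpower r B) * (B * Rpower r (B - 1)) * (B * Rpower r (B - 1))
                     + u1 (Rpower r B) * (B * ((B - 1) * Rpower r (B - 2))))).

Lemma is_derive_power_transform r : 0 < r -> is_derive power_transform r (power_transform_d1 r).
Proof.
  intros Hr. apply (is_derive_Rmult (fun r => Rpower r A) (fun r => u (Rpower r B))).
  - apply is_derive_Rpower, Hr.
  - apply (is_derive_Rcomp u (fun r => Rpower r B));
    [apply Hu1, Rpower_pos | apply is_derive_Rpower, Hr].
Qed.

Lemma is_derive_power_transform_d1 r :
  0 < r -> is_derive power_transform_d1 r (power_transform_d2 r).
Proof.
  intros Hr. apply is_derive_Rplus.
  - apply (is_derive_eq _ _ (A * ((A - 1) * Rpower r (A - 1 - 1)) * u (Rpower r B)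
                             + A * Rpower r (A - 1) * (u1 (Rpower r B) * (B * Rpower r (B - 1))))).
    { replace (A - 1 - 1) with (A - 2) by ring. ring. }
    apply (is_derive_Rmult (fun r => A * Rpower r (A - 1)) (fun r => u (Rpower r B))).
    + apply is_derive_Rscal, is_derive_Rpower, Hr.
    + apply (is_derive_Rcomp u (fun r => Rpower r B));
      [apply Hu1, Rpower_pos | apply is_derive_Rpower, Hr].
  - apply (is_derive_Rmult (fun r => Rpower r A)
             (fun r => u1 (Rpower r B) * (B * Rpower r (B - 1)))).
    + apply (is_derive_eq _ _ (A * Rpower r (A - 1))); [ring | apply is_derive_Rpower, Hr].
    + apply (is_derive_Rmult (fun r => u1 (Rpower r B)) (fun r => B * Rpower r (B - 1))).
      * apply (is_derive_Rcomp u1 (fun r => Rpower r B));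
          [apply Hu2, Rpower_pos | apply is_derive_Rpower, Hr].
      * apply (is_derive_eq _ _ (B * ((B - 1) * Rpower r (B - 1 - 1))));
          [replace (B - 1 - 1) with (B - 2) by ring; ring |].
        apply is_derive_Rscal, is_derive_Rpower, Hr.
Qed.

Lemma Derive_power_transform r : 0 < r -> Derive power_transform r = power_transform_d1 r.
Proof. intros Hr; apply is_derive_unique, is_derive_power_transform, Hr. Qed.

Lemma Derive_2_power_transform r : 0 < r -> Derive_n power_transform 2 r = power_transform_d2 r.
Proof.
  intros Hr. apply is_derive_unique.
  apply (is_derive_ext_loc power_transform_d1); [| apply is_derive_power_transform_d1, Hr].
  apply locally_of_pos; auto. intros; symmetry; apply Derive_power_transform; auto.
Qed.

Lemma continuous_power_transform_d2 r :
  0 < r -> continuous u (Rpower r B) -> continuous u1 (Rpower r B) -> continuous u2 (Rpower r B) ->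
  continuous power_transform_d2 r.
Proof.
  intros Hr Hc0 Hc1 Hc2.
  assert (HP : forall e, continuous (fun r => Rpower r e) r)
    by (intros; apply continuous_Rpower, Hr).
  assert (HC : forall f : R -> R,
             continuous f (Rpower r B) -> continuous (fun r => f (Rpower r B)) r)
    by (intros f Hf; apply (continuous_Rcomp (fun r => Rpower r B) f); auto).
  unfold power_transform_d2.
  repeat match goal with
  | |- continuous (fun y => @?f y + @?g y) _ => apply (continuous_Rplus f g)
  | |- continuous (fun y => @?f y * @?g y) _ => apply (continuous_Rmult f g)
  | |- continuous (fun y => Rpower y _) _ => apply HP
  | |- continuous (fun _ => ?k) _ => apply continuous_const
  | |- continuous (fun y => ?f (Rpower y B)) _ => apply HC; assumption
  end.
Qed.

End PowerTransform.

Lemma radial_laplacian_power_transform (n th : R) (u u1 u2 : R -> R) r :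
  0 < th -> 0 < r ->
  let rho := Rpower r (- th) in
  power_transform_d2 (2 - n) (- th) u u1 u2 r
    + (n - 1) / r * power_transform_d1 (2 - n) (- th) u u1 r
  = th ^ 2 * Rpower r (- n - 2 * th) * (u2 rho + (2 + (n - 2) / th - 1) / rho * u1 rho).
Proof.
  intros Hth Hr rho. unfold power_transform_d1, power_transform_d2. fold rho.
  assert (Hrho : 0 < rho) by apply Rpower_pos.
  set (P := Rpower r (2 - n)).
  assert (Hshift : forall e k, Rpower r (e - INR k) = Rpower r e / r ^ k).
  { intros e k. unfold Rminus. rewrite Rpower_plus, Rpower_Ropp, Rpower_pow by exact Hr.
    reflexivity. }
  assert (E1 : Rpower r (2 - n - 1) = P / r)
    by (rewrite (Hshift _ 1%nat); fold P; simpl; field; lra).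
  assert (E2 : Rpower r (2 - n - 2) = P / r ^ 2) by apply (Hshift _ 2%nat).
  assert (E3 : Rpower r (- th - 1) = rho / r)
    by (rewrite (Hshift _ 1%nat); fold rho; simpl; field; lra).
  assert (E4 : Rpower r (- th - 2) = rho / r ^ 2) by apply (Hshift _ 2%nat).
  assert (E5 : Rpower r (- n - 2 * th) = P * rho ^ 2 / r ^ 2).
  { replace (- n - 2 * th) with (2 - n + - th + - th - INR 2) by (simpl; ring).
    rewrite Hshift, !Rpower_plus. fold P rho. simpl. field. lra. }
  rewrite E1, E2, E3, E4, E5. field. repeat split; lra.
Qed.

Section Main.

Variable N : nat.
Variables beta k p : R.
Hypothesis HN : (3 <= N)%nat.
Hypothesis Hbeta : -2 < beta.
Hypothesis Hk : 0 < k.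
Hypothesis HpS : pS N beta < p.

Let n := INR N.

Lemma n_ge_3 : 3 <= n.
Proof. unfold n. replace 3 with (INR 3) by (simpl; ring). apply le_INR, HN. Qed.

Lemma p_gt_pS : n + 2 + 2 * beta < p * (n - 2).
Proof.
  pose proof n_ge_3. unfold pS in HpS. fold n in HpS.
  apply Rmult_lt_compat_r with (r := n - 2) in HpS; [| lra].
  unfold Rdiv in HpS. rewrite Rmult_assoc, Rinv_l in HpS by lra. lra.
Qed.

Definition theta := ((n - 2) * p - n - beta) / 2.
Definition emden_dim := 2 + (n - 2) / theta.
Definition emden_coef := k / theta ^ 2.

Lemma theta_pos : 0 < theta.
Proof. unfold theta. pose proof p_gt_pS. pose proof n_ge_3. lra. Qed.

Lemma p_gt_1 : 1 < p.
Proof.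
  pose proof p_gt_pS. pose proof n_ge_3. destruct (Rle_or_lt p 1); auto.
  assert (p * (n - 2) <= 1 * (n - 2)) by (apply Rmult_le_compat_r; lra). lra.
Qed.

Lemma emden_dim_gt_2 : 2 < emden_dim.
Proof.
  unfold emden_dim. pose proof n_ge_3. pose proof theta_pos.
  assert (0 < (n - 2) / theta) by (apply Rdiv_lt_0_compat; lra). lra.
Qed.

Lemma emden_coef_pos : 0 < emden_coef.
Proof. apply Rdiv_lt_0_compat; [exact Hk | apply pow_lt, theta_pos]. Qed.

Lemma emden_subcritical : (emden_dim - 2) * (p - 1) < 4.
Proof.
  unfold emden_dim. pose proof theta_pos. pose proof n_ge_3. pose proof p_gt_pS.
  replace (2 + (n - 2) / theta - 2) with ((n - 2) / theta) by ring.
  apply Rmult_lt_reg_r with theta; auto.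
  replace ((n - 2) / theta * (p - 1) * theta) with ((n - 2) * (p - 1)) by (field; lra).
  unfold theta. lra.
Qed.

Lemma weight_exponent : - n - 2 * theta = beta + (2 - n) * p.
Proof. unfold theta. field. Qed.

Let Ha := emden_dim_gt_2.
Let Hc := emden_coef_pos.
Let Hp1 : 1 <= p. Proof. pose proof p_gt_1; lra. Qed.

Lemma Rpower_theta_inv r : 0 < r -> Rpower (Rpower r (- theta)) (- / theta) = r.
Proof.
  intros Hr. rewrite <- Rinv_opp.
  apply Rpower_Rpower_inv; [exact Hr | pose proof theta_pos; lra].
Qed.

Lemma Rpower_inv_theta r : 0 < r -> Rpower (Rpower r (- / theta)) (- theta) = r.
Proof.
  intros Hr. rewrite <- Rinv_opp.
  apply Rpower_inv_Rpower; [exact Hr | pose proof theta_pos; lra].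
Qed.

Definition ubar := emden_sol emden_dim emden_coef p.
Definition vbar := power_transform (2 - n) (- theta) ubar.

Lemma admissible_ubar : admissible ubar.
Proof. apply admissible_emden_sol; auto. Qed.

Lemma ubar_fixed t : emden_op emden_dim emden_coef p ubar t = ubar t.
Proof. apply emden_sol_fixed; auto. Qed.

Let ubar_d1 := emden_deriv emden_dim emden_coef p ubar.
Let ubar_d2 := emden_deriv2 emden_dim emden_coef p ubar.

Lemma is_derive_ubar s : 0 < s -> is_derive ubar s (ubar_d1 s).
Proof. intros; apply is_derive_fixed; auto using admissible_ubar, ubar_fixed. Qed.

Lemma is_derive_ubar_d1 s : 0 < s -> is_derive ubar_d1 s (ubar_d2 s).
Proof. intros; apply is_derive_emden_deriv; auto using admissible_ubar. Qed.

Lemma ubar_has_zero : exists t, 0 < t /\ ubar t = 0.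
Proof.
  pose proof (fixed_at_0 _ _ _ _ ubar_fixed) as Hu0.
  destruct (classic (exists t, 0 < t /\ ubar t <= 0)) as [[t [Ht Hut]] | Hnone].
  - destruct (Req_dec (ubar t) 0); [exists t; auto |].
    destruct (IVT (fun x => - ubar x) 0 t) as [z [Hz Hz0]]; [| lra | lra | lra |].
    + intros x. apply continuity_pt_filterlim, (continuous_opp ubar), admissible_ubar.
    + exists z. split; [| lra]. destruct (Req_dec z 0) as [-> |]; lra.
  - exfalso. apply (fixed_not_pos emden_dim emden_coef p Ha Hc p_gt_1 emden_subcritical ubar
                      admissible_ubar ubar_fixed).
    intros t Ht. destruct (Rlt_or_le 0 (ubar t)); auto. exfalso; apply Hnone; exists t; auto.
Qed.

Lemma Derive_vbar r : 0 < r -> Derive vbar r = power_transform_d1 (2 - n) (- theta) ubar ubar_d1 r.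
Proof. apply Derive_power_transform, is_derive_ubar. Qed.

Lemma Derive_2_vbar r :
  0 < r -> Derive_n vbar 2 r = power_transform_d2 (2 - n) (- theta) ubar ubar_d1 ubar_d2 r.
Proof. apply Derive_2_power_transform; [apply is_derive_ubar | apply is_derive_ubar_d1]. Qed.

Lemma C2_pos_vbar : C2_pos vbar.
Proof.
  split; [| split]; intros r Hr.
  - eexists. apply is_derive_power_transform; auto. apply is_derive_ubar.
  - eexists. apply (is_derive_ext_loc (power_transform_d1 (2 - n) (- theta) ubar ubar_d1)).
    + apply locally_of_pos; auto. intros; symmetry; apply Derive_vbar; auto.
    + apply is_derive_power_transform_d1; auto; [apply is_derive_ubar | apply is_derive_ubar_d1].
  - apply (continuous_ext_loc _ (power_transform_d2 (2 - n) (- theta) ubar ubar_d1 ubar_d2)).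
    + apply locally_of_pos; auto. intros; symmetry; apply Derive_2_vbar; auto.
    + assert (0 < Rpower r (- theta)) by apply Rpower_pos.
      apply continuous_power_transform_d2; auto.
      * apply admissible_ubar.
      * apply continuous_emden_deriv; auto using admissible_ubar.
      * apply continuous_emden_deriv2; auto using admissible_ubar.
Qed.

Lemma vbar_ode r :
  0 < r ->
  Derive_n vbar 2 r + (n - 1) / r * Derive vbar r + k * Rpower r beta * pospow (vbar r) p = 0.
Proof.
  intros Hr. rewrite Derive_vbar, Derive_2_vbar, radial_laplacian_power_transform
    by (auto || apply theta_pos).
  cbv zeta. set (rho := Rpower r (- theta)). assert (Hrho : 0 < rho) by apply Rpower_pos.
  pose proof (emden_deriv_ode emden_dim emden_coef p ubar rho Hrho) as Hode.
  fold ubar_d1 ubar_d2 emden_dim in Hode |- *.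
  replace (ubar_d2 rho + (emden_dim - 1) / rho * ubar_d1 rho)
    with (- emden_coef * pospow (ubar rho) p) by lra.
  unfold vbar, power_transform. fold rho. rewrite pospow_mult, Rpower_mult by apply Rpower_pos.
  rewrite weight_exponent, Rpower_plus. unfold emden_coef. field. pose proof theta_pos; lra.
Qed.

Lemma pow_Rpower_n r : 0 < r -> r ^ (N - 2) = Rpower r (n - 2).
Proof.
  intros Hr. rewrite <- Rpower_pow by exact Hr. f_equal. unfold n. rewrite minus_INR by lia.
  reflexivity.
Qed.

Lemma vbar_limit : is_lim (fun r => r ^ (N - 2) * vbar r) p_infty 1.
Proof.
  apply is_lim_spec. intros eps.
  pose proof (proj1 admissible_ubar 0) as Hc0. apply filterlim_locally with (eps := eps) in Hc0.
  destruct Hc0 as [eta Heta]. exists (Rpower eta (- / theta)). intros r Hr.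
  pose proof (Rpower_pos eta (- / theta)).
  rewrite pow_Rpower_n by lra. unfold vbar, power_transform.
  rewrite <- Rmult_assoc, <- Rpower_plus. replace (n - 2 + (2 - n)) with 0 by ring.
  rewrite Rpower_O, Rmult_1_l by lra.
  rewrite <- (fixed_at_0 _ _ _ _ ubar_fixed). apply (Heta (Rpower r (- theta))).
  change (Rabs (Rpower r (- theta) - 0) < eta).
  rewrite Rminus_0_r, Rabs_pos_eq by (left; apply Rpower_pos).
  rewrite <- (Rpower_inv_theta eta) by apply cond_pos.
  apply Rlt_Rpower_l_neg; [lra | pose proof theta_pos; lra].
Qed.

Lemma vbar_solves : solves N beta k p vbar.
Proof. split; [apply C2_pos_vbar | split; [intros; apply vbar_ode; auto | apply vbar_limit]]. Qed.

Lemma vbar_zero_lub : exists rbar, is_lub (fun r => 0 < r /\ vbar r = 0) rbar /\ 0 < rbar.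
Proof.
  destruct ubar_has_zero as [t0 [Ht0 Hz]].
  set (r0 := Rpower t0 (- / theta)). assert (Hr0 : 0 < r0) by apply Rpower_pos.
  assert (Er0 : 0 < r0 /\ vbar r0 = 0).
  { split; auto. unfold vbar, power_transform, r0. rewrite Rpower_inv_theta, Hz by auto. ring. }
  (* zeros of [ubar] lie beyond [sqrt (4 / c)], since [ubar t >= 1 - c t^2 / 4] *)
  set (s0 := sqrt (4 / emden_coef)).
  assert (Hs0 : 0 < s0) by (apply sqrt_lt_R0, Rdiv_lt_0_compat; lra).
  assert (Hs : s0 * s0 = 4 / emden_coef) by (apply sqrt_sqrt; left; apply Rdiv_lt_0_compat; lra).
  assert (Hbd : bound (fun r => 0 < r /\ vbar r = 0)).
  { exists (Rpower s0 (- / theta)). intros r [Hr Hv].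
    set (rho := Rpower r (- theta)). assert (Hrho : 0 < rho) by apply Rpower_pos.
    assert (Hu : ubar rho = 0).
    { unfold vbar, power_transform in Hv. fold rho in Hv. pose proof (Rpower_pos r (2 - n)).
      apply Rmult_integral in Hv. destruct Hv; [lra | auto]. }
    pose proof (fixed_ge _ _ _ Ha Hc Hp1 _ admissible_ubar ubar_fixed rho ltac:(lra)) as Hge.
    rewrite Hu in Hge.
    assert (4 / emden_coef <= rho ^ 2).
    { apply Rmult_le_reg_l with emden_coef; auto.
      replace (emden_coef * (4 / emden_coef)) with 4 by (field; lra). lra. }
    assert (s0 <= rho) by (destruct (Rle_or_lt s0 rho); auto; nra).
    rewrite <- (Rpower_theta_inv r) by auto. fold rho.
    apply Rle_Rpower_l_neg; [lra |].
    pose proof theta_pos. assert (0 < / theta) by (apply Rinv_0_lt_compat; auto). lra. }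
  destruct (completeness _ Hbd (ex_intro _ r0 Er0)) as [m Hm].
  exists m. split; auto. destruct Hm as [Hub _]. specialize (Hub r0 Er0). lra.
Qed.

Section Uniqueness.

Variable w : R -> R.
Hypothesis Hw : solves N beta k p w.

(* [u(rho) = rho^(-(n-2)/theta) w(rho^(-1/theta))] inverts [w = power_transform (2-n) (-theta) u] *)
Let uw := power_transform (- (n - 2) / theta) (- / theta) w.
Let uw_d1 := power_transform_d1 (- (n - 2) / theta) (- / theta) w (Derive w).
Let uw_d2 := power_transform_d2 (- (n - 2) / theta) (- / theta) w (Derive w) (Derive_n w 2).

Lemma is_derive_w s : 0 < s -> is_derive w s (Derive w s).
Proof. intros Hs. apply Derive_correct. destruct Hw as [[Hd1 _] _]. apply Hd1, Hs. Qed.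

Lemma is_derive_Derive_w s : 0 < s -> is_derive (Derive w) s (Derive_n w 2 s).
Proof.
  intros Hs. apply (Derive_correct (Derive w)). destruct Hw as [[_ [Hd2 _]] _]. apply Hd2, Hs.
Qed.

Lemma is_derive_uw s : 0 < s -> is_derive uw s (uw_d1 s).
Proof. apply is_derive_power_transform, is_derive_w. Qed.

Lemma is_derive_uw_d1 s : 0 < s -> is_derive uw_d1 s (uw_d2 s).
Proof. apply is_derive_power_transform_d1; [apply is_derive_w | apply is_derive_Derive_w]. Qed.

Lemma power_transform_uw r : 0 < r -> power_transform (2 - n) (- theta) uw r = w r.
Proof.
  intros Hr. pose proof theta_pos. unfold uw, power_transform.
  rewrite !Rpower_mult. replace (- theta * - / theta) with 1 by (field; lra).
  rewrite Rpower_1, <- Rmult_assoc, <- Rpower_plus by auto.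
  replace (2 - n + - theta * (- (n - 2) / theta)) with 0 by (field; lra).
  rewrite Rpower_O by auto. ring.
Qed.

Lemma uw_ode rho :
  0 < rho -> uw_d2 rho + (emden_dim - 1) / rho * uw_d1 rho + emden_coef * pospow (uw rho) p = 0.
Proof.
  intros Hrho. pose proof theta_pos.
  set (r := Rpower rho (- / theta)). assert (Hr : 0 < r) by apply Rpower_pos.
  assert (Erho : Rpower r (- theta) = rho) by (apply Rpower_inv_theta, Hrho).
  destruct Hw as [_ [Hode _]]. specialize (Hode r Hr). fold n in Hode.
  assert (Hloc : locally r (fun t => power_transform (2 - n) (- theta) uw t = w t))
    by (apply locally_of_pos; auto; intros; apply power_transform_uw; auto).
  rewrite <- (Derive_n_ext_loc _ w 2 r Hloc), <- (Derive_ext_loc _ w r Hloc),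
    <- (power_transform_uw r Hr) in Hode.
  rewrite (Derive_2_power_transform _ _ uw uw_d1 uw_d2 is_derive_uw is_derive_uw_d1 r Hr),
    (Derive_power_transform _ _ uw uw_d1 is_derive_uw r Hr) in Hode.
  rewrite (radial_laplacian_power_transform n theta uw uw_d1 uw_d2 r theta_pos Hr) in Hode.
  cbv zeta in Hode. rewrite Erho in Hode. fold emden_dim in Hode.
  unfold power_transform in Hode. rewrite Erho, pospow_mult, Rpower_mult in Hode
    by apply Rpower_pos.
  rewrite weight_exponent, Rpower_plus in Hode.
  apply Rmult_eq_reg_l with (theta ^ 2 * (Rpower r beta * Rpower r ((2 - n) * p)));
    [| apply Rgt_not_eq, Rmult_lt_0_compat;
      [apply pow_lt; lra | apply Rmult_lt_0_compat; apply Rpower_pos]].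
  rewrite Rmult_0_r, <- Hode. unfold emden_coef. field. lra.
Qed.

Let uw_ext (rho : R) := if Rle_dec rho 0 then 1 else uw rho.

Lemma uw_eq_w rho :
  0 < rho -> uw rho = Rpower rho (- / theta) ^ (N - 2) * w (Rpower rho (- / theta)).
Proof.
  intros Hrho. pose proof theta_pos. rewrite pow_Rpower_n by apply Rpower_pos.
  unfold uw, power_transform. rewrite Rpower_mult. f_equal. f_equal. field. lra.
Qed.

Lemma continuous_uw_ext_0 : continuous uw_ext 0.
Proof.
  destruct Hw as [_ [_ Hlim]]. apply is_lim_spec in Hlim.
  apply filterlim_locally. intros eps. destruct (Hlim eps) as [M HM].
  set (M' := Rmax M 0 + 1). pose proof (Rmax_l M 0). pose proof (Rmax_r M 0).
  exists (mkposreal _ (Rpower_pos M' (- theta))). intros y Hy.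
  change (Rabs (y - 0) < Rpower M' (- theta)) in Hy. change (Rabs (uw_ext y - uw_ext 0) < eps).
  unfold uw_ext. destruct (Rle_dec 0 0) as [_ |]; [| lra].
  destruct (Rle_dec y 0); [rewrite Rminus_diag, Rabs_R0; apply cond_pos |].
  rewrite Rminus_0_r, Rabs_pos_eq in Hy by lra.
  assert (HMy : M' < Rpower y (- / theta)).
  { rewrite <- (Rpower_theta_inv M') by (unfold M'; lra).
    apply Rlt_Rpower_l_neg; [lra |].
    pose proof theta_pos. assert (0 < / theta) by (apply Rinv_0_lt_compat; auto). lra. }
  rewrite uw_eq_w by lra. apply HM. unfold M' in HMy. lra.
Qed.

Lemma uw_ext_fixed :
  admissible uw_ext /\ forall t, emden_op emden_dim emden_coef p uw_ext t = uw_ext t.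
Proof.
  assert (Hpos : forall rho, 0 < rho -> uw_ext rho = uw rho)
    by (intros rho Hrho; unfold uw_ext; destruct (Rle_dec rho 0); [lra | auto]).
  assert (Hd1 : forall r, 0 < r -> is_derive uw_ext r (uw_d1 r)).
  { intros r Hr. apply (is_derive_ext_loc uw); [| apply is_derive_uw, Hr].
    apply locally_of_pos; auto. intros; symmetry; apply Hpos; auto. }
  assert (Hode : forall r, 0 < r ->
            uw_d2 r + (emden_dim - 1) / r * uw_d1 r + emden_coef * pospow (uw_ext r) p = 0)
    by (intros r Hr; rewrite Hpos by auto; apply uw_ode, Hr).
  assert (Hneg : forall r, r <= 0 -> uw_ext r = 1)
    by (intros r Hr; unfold uw_ext; destruct (Rle_dec r 0); [auto | lra]).
  split.
  - apply (admissible_ode_sol _ _ _ Ha Hc Hp1 uw_ext uw_d1 uw_d2); auto.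
    + exact is_derive_uw_d1.
    + exact continuous_uw_ext_0.
  - apply (ode_sol_fixed _ _ _ Ha Hc Hp1 uw_ext uw_d1 uw_d2); auto.
    + exact is_derive_uw_d1.
    + exact continuous_uw_ext_0.
Qed.

Lemma solution_unique r : 0 < r -> w r = vbar r.
Proof.
  intros Hr. destruct uw_ext_fixed as [Hadm Hfix].
  rewrite <- (power_transform_uw r Hr). unfold vbar, power_transform.
  set (rho := Rpower r (- theta)). assert (Hrho : 0 < rho) by apply Rpower_pos.
  f_equal. rewrite <- (fixed_point_unique _ _ _ Ha Hc Hp1 uw_ext ubar Hadm admissible_ubar Hfix
                        ubar_fixed rho ltac:(lra)).
  unfold uw_ext. destruct (Rle_dec rho 0); [lra | reflexivity].
Qed.

End Uniqueness.

End Main.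

Theorem lemma6p3 (N : nat) (beta kinf p : R) :
  (3 <= N)%nat -> -2 < beta -> 0 < kinf -> pS N beta < p ->
  exists v : R -> R,
    solves N beta kinf p v /\
    (forall w : R -> R, solves N beta kinf p w -> forall r, 0 < r -> w r = v r) /\
    exists rbar : R,
      is_lub (fun r => 0 < r /\ v r = 0) rbar /\ 0 < rbar.
Proof.
  intros HN Hbeta Hk Hp. exists (vbar N beta kinf p). split; [| split].
  - apply vbar_solves; auto.
  - intros w Hw r Hr. apply solution_unique; auto.
  - apply vbar_zero_lub; auto.
Qed.
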